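(* Let $r_1,r_2\in\mathbb{R}$, $A=(a_{ij})_{i,j=1,2}$ with $a_{ij}>0$, $A$ invertible, $(b_1,b_2)^T=A^{-1}(r_1,r_2)^T$ with $b_1,b_2>0$; assume $\langle Ax,x\rangle>0$ for all $x\in\mathbb{R}^2\setminus\{0\}$ and that $\begin{pmatrix}b_1a_{11}&b_1a_{12}\\ b_2a_{21}&b_2a_{22}\end{pmatrix}$ has two real eigenvalues $\mu_1,\mu_2>0$. Let $\tau>0$ with $\min\{2\pi/\mu_1,2\pi/\mu_2\}<\tau$ and suppose there are $n_1\neq n_2$ in $\mathbb{N}\cup\{0\}$ with $\frac{\pi}{2}+2n_i\pi<\mu_i\tau<\frac{\pi}{2}+2(n_i+1)\pi$ for $i=1,2$. Consider $$\dot x_1(t)=-\lambda\big(a_{11}x_1(t-\tau/\lambda)+a_{12}x_2(t-\tau/\lambda)\big)(b_1+x_1(t)),$$ $$\dot x_2(t)=-\lambda\big(a_{21}x_1(t-\tau/\lambda)+a_{22}x_2(t-\tau/\lambda)\big)(b_2+x_2(t)).\qquad(\mathrm{P})$$ Let $\lambda_1,\lambda_2\in\mathbb{R}^+$ with $\lambda_1<\lambda_2$. Then the origin is an isolated solution of (P): there exists $m_1>0$ such that if $((x_1,x_2),\lambda)\in\Theta_0\times[\lambda_1,\lambda_2]$ is a nontrivial solution of (P), then $(x_1,x_2)\notin\{(x_1,x_2)\in\Theta_0:\|x_1\|\le m_1,\ \|x_2\|\le m_1\}$.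
   Context: $\hat E$ denotes the Banach space of functions $x\in C([0,2\pi],\mathbb{R})$ with $\int_0^{2\pi}\dot x(t)^2\,dt<\infty$, $x(0)=x(2\pi)$ and $\int_0^{2\pi}x(t)\,dt=0$, with norm $\|x\|^2=\int_0^{2\pi}(\dot x(t)^2+x(t)^2)\,dt$; such functions are identified with their $2\pi$-periodic extensions to $\mathbb{R}$. $E=\hat E\times\hat E$ and $\Theta_0=\{(x_1,x_2)\in E: x_i(t)>-b_i\text{ for }t\in[0,2\pi],\ i=1,2\}$. A solution $((x_1,x_2),\lambda)$ of (P) is a pair $(x_1,x_2)\in E$ and $\lambda>0$ satisfying (P) for all $t$; nontrivial means $(x_1,x_2)\not\equiv 0$. *)

From Stdlib Require Import Reals.
From Coquelicot Require Import Coquelicot.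
Open Scope R_scope.

(* Membership in \hat E (for functions identified with their 2pi-periodic
   extensions to R).  The derivative used is Coquelicot's Derive. *)
Definition in_Ehat (x : R -> R) : Prop :=
  (forall t, continuous x t) /\
  (forall t, x (t + 2 * PI) = x t) /\
  ex_RInt (fun t => (Derive x t) ^ 2) 0 (2 * PI) /\
  RInt x 0 (2 * PI) = 0.

Definition Ehat_norm (x : R -> R) : R :=
  sqrt (RInt (fun t => (Derive x t) ^ 2 + (x t) ^ 2) 0 (2 * PI)).

Definition in_Theta0 (b1 b2 : R) (x1 x2 : R -> R) : Prop :=
  in_Ehat x1 /\ in_Ehat x2 /\
  (forall t, 0 <= t <= 2 * PI -> x1 t > - b1) /\
  (forall t, 0 <= t <= 2 * PI -> x2 t > - b2).

Definition solves_P (a11 a12 a21 a22 b1 b2 tau lam : R) (x1 x2 : R -> R) : Prop :=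
  forall t,
    is_derive x1 t
      (- lam * (a11 * x1 (t - tau / lam) + a12 * x2 (t - tau / lam)) * (b1 + x1 t)) /\
    is_derive x2 t
      (- lam * (a21 * x1 (t - tau / lam) + a22 * x2 (t - tau / lam)) * (b2 + x2 t)).

Definition is_eigenvalue2 (m11 m12 m21 m22 mu : R) : Prop :=
  exists v1 v2 : R, (v1 <> 0 \/ v2 <> 0) /\
    m11 * v1 + m12 * v2 = mu * v1 /\ m21 * v1 + m22 * v2 = mu * v2.

(* Let [mu] be an eigenvalue of [B = [b1 a11, b1 a12; b2 a21, b2 a22]].  For a solution [(x1, x2)]
   of (P), the combination [z = (b2 a22 - mu) x1 - b1 a12 x2] built from a left eigenvector of [B]
   satisfies [z' + lam mu z(t - tau/lam) = lam Q(x(t), x(t - tau/lam))] with [Q] quadratic.  On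
   2 PI-periodic functions the operator [z |-> z' + c z(. - s)] acts on the k-th Fourier mode by
   a factor of squared modulus [k^2 - 2 k c sin (k s) + c^2]; since [c s = mu tau] and
   [sin (mu tau) < 1], this is bounded below by some [delta > 0] uniformly in [k] and in
   [lam >= lam1].  Bessel's inequality and the completeness of the trigonometric system (through
   the Landau kernel) turn this into [delta ||z||^2 <= ||z' + c z(. - s)||^2].  The right-hand
   side is at most [C sup |x|^2 (||z_1||^2 + ||z_2||^2)] for the two eigen-combinations, and
   [sup |x_i| <= sqrt (2 PI) ||x_i||] because [x_i] has mean zero.  Summing over [mu_1 <> mu_2]
   shows that [z_1 = z_2 = 0], hence [x = 0], as soon as [||x_i|| <= m1] for [m1] small. *)

From Stdlib Require Import Reals Lra Lia Psatz.
From Coquelicot Require Import Coquelicot.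
Open Scope R_scope.

Definition continuous_R (f : R -> R) : Prop := forall t, continuous f t.

Definition periodic (f : R -> R) : Prop := forall t, f (t + 2 * PI) = f t.

Lemma continuous_R_const c : continuous_R (fun _ => c).
Proof. intro; apply continuous_const. Qed.

Lemma continuous_R_id : continuous_R (fun t => t).
Proof. intro; apply continuous_id. Qed.

Lemma continuous_R_plus f g :
  continuous_R f -> continuous_R g -> continuous_R (fun t => f t + g t).
Proof. intros Hf Hg t; apply (continuous_plus f g); auto. Qed.

Lemma continuous_R_minus f g :
  continuous_R f -> continuous_R g -> continuous_R (fun t => f t - g t).
Proof. intros Hf Hg t; apply (continuous_minus f g); auto. Qed.

Lemma continuous_R_mult f g :
  continuous_R f -> continuous_R g -> continuous_R (fun t => f t * g t).
Proof. intros Hf Hg t; apply (continuous_mult f g); auto. Qed.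

Lemma continuous_R_pow f n : continuous_R f -> continuous_R (fun t => f t ^ n).
Proof.
  intros Hf; induction n as [|n IH]; intro t; simpl.
  - apply continuous_const.
  - apply (continuous_mult f (fun t => f t ^ n)); auto.
Qed.

Lemma continuous_R_comp f g :
  continuous_R f -> continuous_R g -> continuous_R (fun t => g (f t)).
Proof. intros Hf Hg t; apply (continuous_comp f g); auto. Qed.

Lemma continuous_R_cos : continuous_R cos.
Proof. intro; apply continuous_cos. Qed.

Lemma continuous_R_sin : continuous_R sin.
Proof. intro; apply continuous_sin. Qed.

Lemma continuous_R_Rabs : continuous_R Rabs.
Proof. intro; apply continuous_Rabs. Qed.

Lemma continuous_R_derive (f df : R -> R) : (forall t, is_derive f t (df t)) -> continuous_R f.
Proof.
  intros Hd t; apply (ex_derive_continuous (K := R_AbsRing) (V := R_NormedModule)).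
  eexists; apply Hd.
Qed.

Lemma continuous_R_div_r f c : continuous_R f -> continuous_R (fun t => f t / c).
Proof.
  intros Hf; apply (continuous_R_mult f (fun _ => / c)); [auto | apply continuous_R_const].
Qed.

(* Syntax-directed on purpose: a failing blind [apply] unfolds [cos], [RInt], ... and is slow. *)
Ltac continuity_R :=
  repeat match goal with
  | |- continuous_R _ => progress cbv beta
  | H : continuous_R ?f |- continuous_R ?f => exact H
  | |- continuous_R (fun _ => ?c) => apply continuous_R_const
  | |- continuous_R (fun t => t) => apply continuous_R_id
  | |- continuous_R cos => apply continuous_R_cos
  | |- continuous_R sin => apply continuous_R_sin
  | |- continuous_R Rabs => apply continuous_R_Rabs
  | |- continuous_R (Rmult ?c) => change (continuous_R (fun t => c * t))
  | |- continuous_R (Rplus ?c) => change (continuous_R (fun t => c + t))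
  | |- continuous_R (Rminus ?c) => change (continuous_R (fun t => c - t))
  | |- continuous_R (fun t => _ + _) => apply continuous_R_plus
  | |- continuous_R (fun t => _ - _) => apply continuous_R_minus
  | |- continuous_R (fun t => _ * _) => apply continuous_R_mult
  | |- continuous_R (fun t => _ / _) => apply continuous_R_div_r
  | |- continuous_R (fun t => _ ^ _) => apply continuous_R_pow
  | |- continuous_R (fun t => ?g (@?f t)) =>
      lazymatch f with
      | fun t => t => fail
      | _ => apply (continuous_R_comp f g)
      end
  end.

(* Coquelicot types an equation whose left side is an [RInt] in its normed-module carrier;
   [ring] and [field] only recognise it once converted to [R]. *)
Ltac R_eq := lazymatch goal with |- ?a = ?b => change ((a : R) = b) end.

Lemma ex_RInt_continuous_R f a b : continuous_R f -> ex_RInt f a b.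
Proof. intros Hf; apply (ex_RInt_continuous (V := R_CompleteNormedModule)); auto. Qed.

Lemma RInt_Rplus f g a b : continuous_R f -> continuous_R g ->
  RInt (fun t => f t + g t) a b = RInt f a b + RInt g a b.
Proof. intros; apply (RInt_plus f g); apply ex_RInt_continuous_R; auto. Qed.

Lemma RInt_Rminus f g a b : continuous_R f -> continuous_R g ->
  RInt (fun t => f t - g t) a b = RInt f a b - RInt g a b.
Proof. intros; apply (RInt_minus f g); apply ex_RInt_continuous_R; auto. Qed.

Lemma RInt_Rmult_l f c a b : continuous_R f ->
  RInt (fun t => c * f t) a b = c * RInt f a b.
Proof. intros; apply (RInt_scal f a b c); apply ex_RInt_continuous_R; auto. Qed.

Lemma RInt_Rmult_r f c a b : continuous_R f ->
  RInt (fun t => f t * c) a b = RInt f a b * c.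
Proof.
  intros Hf; rewrite (RInt_ext _ (fun t => c * f t)) by (intros; apply Rmult_comm).
  rewrite RInt_Rmult_l by auto; apply Rmult_comm.
Qed.

Lemma RInt_Rconst (c a b : R) : RInt (fun _ => c) a b = (b - a) * c.
Proof. rewrite RInt_const; reflexivity. Qed.

Lemma RInt_Chasles_R f a b c : continuous_R f -> RInt f a b + RInt f b c = RInt f a c.
Proof. intros; apply (RInt_Chasles f); apply ex_RInt_continuous_R; auto. Qed.

Lemma RInt_swap_R f a b : continuous_R f -> RInt f b a = - RInt f a b.
Proof.
  intros Hf; rewrite <- (opp_RInt_swap f a b); [reflexivity|].
  apply ex_RInt_continuous_R; auto.
Qed.

Lemma continuous_R_sum_f_R0 (F : nat -> R -> R) N : (forall k, continuous_R (F k)) ->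
  continuous_R (fun t => sum_f_R0 (fun k => F k t) N).
Proof. intros HF; induction N; cbn; [apply HF | apply continuous_R_plus; auto]. Qed.

Lemma RInt_sum_f_R0 (F : nat -> R -> R) N a b : (forall k, continuous_R (F k)) ->
  RInt (fun t => sum_f_R0 (fun k => F k t) N) a b = sum_f_R0 (fun k => RInt (F k) a b) N.
Proof.
  intros HF; induction N as [|N IH]; simpl; [reflexivity|].
  rewrite RInt_Rplus, IH; auto using continuous_R_sum_f_R0.
Qed.

Lemma RInt_derive_R (f df : R -> R) a b : (forall t, is_derive f t (df t)) -> continuous_R df ->
  RInt df a b = f b - f a.
Proof.
  intros Hd Hc; apply is_RInt_unique.
  apply (is_RInt_derive (V := R_CompleteNormedModule) f df a b); auto.
Qed.

Lemma RInt_ge_0_R f a b : a <= b -> continuous_R f -> (forall t, a <= t <= b -> 0 <= f t) ->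
  0 <= RInt f a b.
Proof.
  intros Hab Hf Hpos; apply RInt_ge_0; auto using ex_RInt_continuous_R.
  intros; apply Hpos; lra.
Qed.

Lemma RInt_le_R f g a b : a <= b -> continuous_R f -> continuous_R g ->
  (forall t, a <= t <= b -> f t <= g t) -> RInt f a b <= RInt g a b.
Proof.
  intros Hab Hf Hg Hle; apply RInt_le; auto using ex_RInt_continuous_R.
  intros; apply Hle; lra.
Qed.

Lemma abs_RInt_le_R f a b : a <= b -> continuous_R f ->
  Rabs (RInt f a b) <= RInt (fun t => Rabs (f t)) a b.
Proof. intros; apply abs_RInt_le; auto using ex_RInt_continuous_R. Qed.

Lemma RInt_sub_interval f a b c d : c <= a -> a <= b -> b <= d -> continuous_R f ->
  (forall t, c <= t <= d -> 0 <= f t) -> RInt f a b <= RInt f c d.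
Proof.
  intros Hca Hab Hbd Hf Hpos.
  rewrite <- (RInt_Chasles_R f c a d), <- (RInt_Chasles_R f a b d) by auto.
  assert (0 <= RInt f c a) by (apply RInt_ge_0_R; auto; intros; apply Hpos; lra).
  assert (0 <= RInt f b d) by (apply RInt_ge_0_R; auto; intros; apply Hpos; lra).
  lra.
Qed.

Lemma RInt_affine f u v a b : continuous_R f -> u <> 0 ->
  RInt (fun y => f (u * y + v)) a b = / u * RInt f (u * a + v) (u * b + v).
Proof.
  intros Hf Hu.
  assert (E : RInt f (u * a + v) (u * b + v) = u * RInt (fun y => f (u * y + v)) a b).
  { rewrite <- (RInt_comp_lin f u v a b) by (apply ex_RInt_continuous_R; auto).
    apply (RInt_scal (fun y => f (u * y + v))), ex_RInt_continuous_R; continuity_R. }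
  rewrite E; R_eq; field; auto.
Qed.

Lemma RInt_translate f c a b : continuous_R f ->
  RInt (fun y => f (y + c)) a b = RInt f (a + c) (b + c).
Proof.
  intros Hf.
  rewrite (RInt_ext _ (fun y => f (1 * y + c))) by (intros; f_equal; ring).
  rewrite RInt_affine by (auto; lra).
  rewrite !Rmult_1_l, Rinv_1, Rmult_1_l; reflexivity.
Qed.

Lemma RInt_periodic_window f a : continuous_R f -> periodic f ->
  RInt f a (a + 2 * PI) = RInt f 0 (2 * PI).
Proof.
  intros Hf Hp.
  rewrite <- (RInt_Chasles_R f a (2 * PI) (a + 2 * PI)) by auto.
  replace (RInt f (2 * PI) (a + 2 * PI)) with (RInt f 0 a).
  - rewrite Rplus_comm; apply RInt_Chasles_R; auto.
  - rewrite <- (RInt_ext (fun y => f (y + 2 * PI))) by (intros; apply Hp).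
    rewrite RInt_translate by auto; f_equal; ring.
Qed.

Lemma RInt_periodic_translate f c : continuous_R f -> periodic f ->
  RInt (fun t => f (t + c)) 0 (2 * PI) = RInt f 0 (2 * PI).
Proof.
  intros Hf Hp; rewrite RInt_translate by auto.
  rewrite Rplus_0_l, (Rplus_comm (2 * PI)); apply RInt_periodic_window; auto.
Qed.

Lemma RInt_periodic_reflect f c : continuous_R f -> periodic f ->
  RInt (fun v => f (c - v)) 0 (2 * PI) = RInt f 0 (2 * PI).
Proof.
  intros Hf Hp.
  rewrite (RInt_ext _ (fun v => f (-1 * v + c))) by (intros; f_equal; ring).
  rewrite RInt_affine, RInt_swap_R by (auto; lra).
  replace (-1 * 0 + c) with ((c - 2 * PI) + 2 * PI) by ring.
  replace (-1 * (2 * PI) + c) with (c - 2 * PI) by ring.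
  rewrite RInt_periodic_window by auto; lra.
Qed.

Lemma RInt_sqr_ge_0 g a b : a <= b -> continuous_R g -> 0 <= RInt (fun t => g t ^ 2) a b.
Proof. intros; apply RInt_ge_0_R; auto; [continuity_R | intros; apply pow2_ge_0]. Qed.

Lemma RInt_sqr_le_0_eq_0 g a b t : continuous_R g -> a < b -> a <= t <= b ->
  RInt (fun u => g u ^ 2) a b <= 0 -> g t = 0.
Proof.
  intros Hg Hab Ht Hint; destruct (Req_dec (g t) 0) as [|Hgt]; auto; exfalso.
  assert (Hc : continuity_pt g t) by (apply continuity_pt_filterlim, Hg).
  destruct (Hc (Rabs (g t) / 2)) as [d [Hd Hnear]].
  { apply Rabs_pos_lt in Hgt; lra. }
  set (l := Rmax a (t - d / 2)); set (r := Rmin b (t + d / 2)).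
  assert (Hlr : l < r).
  { apply Rmax_lub_lt; apply Rmin_glb_lt; lra. }
  assert (Hpos : 0 < RInt (fun u => g u ^ 2) l r).
  { apply RInt_gt_0; auto.
    - intros u Hu; apply pow2_gt_0; intro Hgu.
      assert (Hdist : R_dist (g u) (g t) < Rabs (g t) / 2).
      { destruct (Req_dec u t) as [->|Hne]; [contradiction|].
        apply Hnear; split; [split; [exact I | auto]|].
        unfold R_dist, l, r in *; cbn.
        pose proof (Rmax_r a (t - d / 2)); pose proof (Rmin_r b (t + d / 2)).
        apply Rabs_def1; lra. }
      unfold R_dist in Hdist; rewrite Hgu, Rminus_0_l, Rabs_Ropp in Hdist.
      pose proof (Rabs_pos (g t)); lra.
    - intros; apply (continuous_R_pow g 2 Hg). }
  assert (RInt (fun u => g u ^ 2) l r <= RInt (fun u => g u ^ 2) a b).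
  { apply RInt_sub_interval; [apply Rmax_l | lra | apply Rmin_l | continuity_R |].
    intros; apply pow2_ge_0. }
  lra.
Qed.

(** * Orthogonality of the trigonometric system *)

Lemma sin_INR_2PI n : sin (INR n * (2 * PI)) = 0.
Proof.
  apply sin_eq_0_1; exists (2 * Z.of_nat n)%Z.
  rewrite mult_IZR, <- INR_IZR_INZ; cbn; ring.
Qed.

Lemma cos_INR_2PI n : cos (INR n * (2 * PI)) = 1.
Proof. rewrite <- cos_0, <- (cos_period 0 n); f_equal; ring. Qed.

Lemma RInt_cos_nat n :
  RInt (fun t => cos (INR n * t)) 0 (2 * PI) = if Nat.eq_dec n 0 then 2 * PI else 0.
Proof.
  destruct (Nat.eq_dec n 0) as [->|Hn].
  - rewrite (RInt_ext _ (fun _ => 1)), RInt_Rconst; [R_eq; ring|].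
    intros; rewrite Rmult_0_l; apply cos_0.
  - assert (HN : INR n <> 0) by (apply not_0_INR; auto).
    rewrite (RInt_derive_R (fun t => sin (INR n * t) / INR n)).
    + rewrite sin_INR_2PI, Rmult_0_r, sin_0; R_eq; field; auto.
    + intro t; auto_derive; auto; field; auto.
    + continuity_R.
Qed.

Lemma RInt_sin_nat n : RInt (fun t => sin (INR n * t)) 0 (2 * PI) = 0.
Proof.
  destruct (Nat.eq_dec n 0) as [->|Hn].
  - rewrite (RInt_ext _ (fun _ => 0)), RInt_Rconst; [R_eq; ring|].
    intros; rewrite Rmult_0_l; apply sin_0.
  - assert (HN : INR n <> 0) by (apply not_0_INR; auto).
    rewrite (RInt_derive_R (fun t => - cos (INR n * t) / INR n)).
    + rewrite cos_INR_2PI, Rmult_0_r, cos_0; R_eq; field; auto.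
    + intro t; auto_derive; auto; field; auto.
    + continuity_R.
Qed.

Lemma RInt_cos_sub_nat j k :
  RInt (fun t => cos ((INR j - INR k) * t)) 0 (2 * PI) = if Nat.eq_dec j k then 2 * PI else 0.
Proof.
  destruct (Compare_dec.le_lt_dec k j) as [Hkj|Hjk].
  - rewrite (RInt_ext _ (fun t => cos (INR (j - k) * t))) by (intros; rewrite minus_INR; auto).
    rewrite RInt_cos_nat; destruct (Nat.eq_dec (j - k) 0), (Nat.eq_dec j k); auto; lia.
  - rewrite (RInt_ext _ (fun t => cos (INR (k - j) * t))).
    + rewrite RInt_cos_nat; destruct (Nat.eq_dec (k - j) 0), (Nat.eq_dec j k); auto; lia.
    + intros; rewrite minus_INR, <- cos_neg by lia; f_equal; ring.
Qed.

Lemma RInt_sin_sub_nat j k : RInt (fun t => sin ((INR j - INR k) * t)) 0 (2 * PI) = 0.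
Proof.
  destruct (Compare_dec.le_lt_dec k j) as [Hkj|Hjk].
  - rewrite (RInt_ext _ (fun t => sin (INR (j - k) * t))) by (intros; rewrite minus_INR; auto).
    apply RInt_sin_nat.
  - rewrite (RInt_ext _ (fun t => -1 * sin (INR (k - j) * t))).
    + rewrite RInt_Rmult_l, RInt_sin_nat by continuity_R; R_eq; ring.
    + intros; rewrite minus_INR by lia.
      replace ((INR j - INR k) * x) with (- ((INR k - INR j) * x)) by ring.
      rewrite sin_neg; R_eq; ring.
Qed.

Definition norm2_cos (k : nat) : R := match k with O => 2 * PI | S _ => PI end.
Definition norm2_sin (k : nat) : R := match k with O => 0 | S _ => PI end.

Lemma norm2_cos_pos k : 0 < norm2_cos k.
Proof. pose proof PI_RGT_0; destruct k; cbn; lra. Qed.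

Lemma RInt_cos_cos_nat j k :
  RInt (fun t => cos (INR j * t) * cos (INR k * t)) 0 (2 * PI) =
  if Nat.eq_dec j k then norm2_cos k else 0.
Proof.
  rewrite (RInt_ext _ (fun t => / 2 * (cos ((INR j - INR k) * t) + cos (INR (j + k) * t)))).
  - rewrite RInt_Rmult_l, RInt_Rplus, RInt_cos_sub_nat, RInt_cos_nat by continuity_R.
    destruct (Nat.eq_dec j k) as [<-|Hjk].
    + destruct (Nat.eq_dec (j + j) 0), j; cbn [norm2_cos norm2_sin]; try lia; R_eq; field.
    + destruct (Nat.eq_dec (j + k) 0); [lia | R_eq; field].
  - intros t _; rewrite plus_INR.
    replace ((INR j - INR k) * t) with (INR j * t - INR k * t) by ring.
    replace ((INR j + INR k) * t) with (INR j * t + INR k * t) by ring.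
    rewrite cos_minus, cos_plus; R_eq; field.
Qed.

Lemma RInt_sin_sin_nat j k :
  RInt (fun t => sin (INR j * t) * sin (INR k * t)) 0 (2 * PI) =
  if Nat.eq_dec j k then norm2_sin k else 0.
Proof.
  rewrite (RInt_ext _ (fun t => / 2 * (cos ((INR j - INR k) * t) - cos (INR (j + k) * t)))).
  - rewrite RInt_Rmult_l, RInt_Rminus, RInt_cos_sub_nat, RInt_cos_nat by continuity_R.
    destruct (Nat.eq_dec j k) as [<-|Hjk].
    + destruct (Nat.eq_dec (j + j) 0), j; cbn [norm2_cos norm2_sin]; try lia; R_eq; field.
    + destruct (Nat.eq_dec (j + k) 0); [lia | R_eq; field].
  - intros t _; rewrite plus_INR.
    replace ((INR j - INR k) * t) with (INR j * t - INR k * t) by ring.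
    replace ((INR j + INR k) * t) with (INR j * t + INR k * t) by ring.
    rewrite cos_minus, cos_plus; R_eq; field.
Qed.

Lemma RInt_cos_sin_nat j k :
  RInt (fun t => cos (INR j * t) * sin (INR k * t)) 0 (2 * PI) = 0.
Proof.
  rewrite (RInt_ext _ (fun t => / 2 * (sin ((INR k - INR j) * t) + sin (INR (k + j) * t)))).
  - rewrite RInt_Rmult_l, RInt_Rplus, RInt_sin_sub_nat, RInt_sin_nat by continuity_R; R_eq; ring.
  - intros t _; rewrite plus_INR.
    replace ((INR k - INR j) * t) with (INR k * t - INR j * t) by ring.
    replace ((INR k + INR j) * t) with (INR k * t + INR j * t) by ring.
    rewrite sin_minus, sin_plus; R_eq; field.
Qed.

(** * Fourier coefficients and Bessel's inequality *)

Definition fourier_cos (k : nat) (g : R -> R) : R :=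
  RInt (fun t => g t * cos (INR k * t)) 0 (2 * PI).
Definition fourier_sin (k : nat) (g : R -> R) : R :=
  RInt (fun t => g t * sin (INR k * t)) 0 (2 * PI).

Definition trig_sum (N : nat) (a b : nat -> R) (t : R) : R :=
  sum_f_R0 (fun k => a k * cos (INR k * t) + b k * sin (INR k * t)) N.

Definition bessel_sum (N : nat) (g : R -> R) : R :=
  sum_f_R0 (fun k => (fourier_cos k g ^ 2 + fourier_sin k g ^ 2) / norm2_cos k) N.

Lemma fourier_sin_0 g : fourier_sin 0 g = 0.
Proof.
  unfold fourier_sin; rewrite (RInt_ext _ (fun _ => 0)), RInt_Rconst; [R_eq; ring|].
  intros; rewrite Rmult_0_l, sin_0; R_eq; ring.
Qed.

Lemma sum_f_R0_delta (c : nat -> R) j N : (j <= N)%nat ->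
  sum_f_R0 (fun k => if Nat.eq_dec k j then c k else 0) N = c j.
Proof.
  intros HjN; induction N as [|N IH].
  - replace j with 0%nat by lia; reflexivity.
  - rewrite tech5; destruct (Nat.eq_dec (S N) j) as [<-|Hne].
    + rewrite sum_eq_R0; [ring|].
      intros k Hk; destruct (Nat.eq_dec k (S N)); [lia | reflexivity].
    + rewrite IH by lia; ring.
Qed.

Lemma continuous_R_trig_sum N a b : continuous_R (trig_sum N a b).
Proof.
  apply (continuous_R_sum_f_R0 (fun k t => a k * cos (INR k * t) + b k * sin (INR k * t))).
  intro; continuity_R.
Qed.

Lemma RInt_mult_trig_sum g N a b : continuous_R g ->
  RInt (fun t => g t * trig_sum N a b t) 0 (2 * PI) =
  sum_f_R0 (fun k => a k * fourier_cos k g + b k * fourier_sin k g) N.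
Proof.
  intros Hg; unfold trig_sum.
  rewrite (RInt_ext _ (fun t => sum_f_R0 (fun k =>
    a k * (g t * cos (INR k * t)) + b k * (g t * sin (INR k * t))) N)).
  - rewrite RInt_sum_f_R0 by (intro; continuity_R).
    apply sum_eq; intros k _; unfold fourier_cos, fourier_sin.
    rewrite RInt_Rplus, !RInt_Rmult_l by continuity_R; reflexivity.
  - intros t _; rewrite scal_sum; apply sum_eq; intros; R_eq; ring.
Qed.

Lemma fourier_cos_trig_sum j N a b : (j <= N)%nat ->
  fourier_cos j (trig_sum N a b) = a j * norm2_cos j.
Proof.
  intros HjN; unfold fourier_cos.
  rewrite (RInt_ext _ (fun t => cos (INR j * t) * trig_sum N a b t)) by (intros; apply Rmult_comm).
  rewrite RInt_mult_trig_sum by continuity_R.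
  rewrite (sum_eq _ (fun k => if Nat.eq_dec k j then a k * norm2_cos k else 0)).
  - apply sum_f_R0_delta; auto.
  - intros k _; unfold fourier_cos, fourier_sin.
    rewrite (RInt_ext (fun t => cos (INR j * t) * cos (INR k * t))
               (fun t => cos (INR k * t) * cos (INR j * t))) by (intros; apply Rmult_comm).
    rewrite RInt_cos_cos_nat, RInt_cos_sin_nat.
    destruct (Nat.eq_dec k j) as [<-|]; ring.
Qed.

Lemma fourier_sin_trig_sum j N a b : (j <= N)%nat ->
  fourier_sin j (trig_sum N a b) = b j * norm2_sin j.
Proof.
  intros HjN; unfold fourier_sin.
  rewrite (RInt_ext _ (fun t => sin (INR j * t) * trig_sum N a b t)) by (intros; apply Rmult_comm).
  rewrite RInt_mult_trig_sum by continuity_R.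
  rewrite (sum_eq _ (fun k => if Nat.eq_dec k j then b k * norm2_sin k else 0)).
  - apply sum_f_R0_delta; auto.
  - intros k _; unfold fourier_cos, fourier_sin.
    rewrite (RInt_ext (fun t => sin (INR j * t) * cos (INR k * t))
               (fun t => cos (INR k * t) * sin (INR j * t))) by (intros; apply Rmult_comm).
    rewrite (RInt_ext (fun t => sin (INR j * t) * sin (INR k * t))
               (fun t => sin (INR k * t) * sin (INR j * t))) by (intros; apply Rmult_comm).
    rewrite RInt_sin_sin_nat, RInt_cos_sin_nat.
    destruct (Nat.eq_dec k j) as [<-|]; ring.
Qed.

Lemma RInt_sqr_sub_trig_sum g N a b : continuous_R g ->
  RInt (fun t => (g t - trig_sum N a b t) ^ 2) 0 (2 * PI) =
  RInt (fun t => g t ^ 2) 0 (2 * PI) + sum_f_R0 (fun k =>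
    a k ^ 2 * norm2_cos k + b k ^ 2 * norm2_sin k
    - 2 * (a k * fourier_cos k g) - 2 * (b k * fourier_sin k g)) N.
Proof.
  intros Hg; pose proof (continuous_R_trig_sum N a b) as HT.
  rewrite (RInt_ext _ (fun t => g t ^ 2 - 2 * (g t * trig_sum N a b t)
                                + trig_sum N a b t * trig_sum N a b t)) by (intros; R_eq; ring).
  rewrite RInt_Rplus, RInt_Rminus, RInt_Rmult_l, !RInt_mult_trig_sum by continuity_R.
  unfold Rminus; rewrite Rplus_assoc; f_equal.
  rewrite (sum_eq (fun k => a k * fourier_cos k (trig_sum N a b) + _)
             (fun k => a k ^ 2 * norm2_cos k + b k ^ 2 * norm2_sin k))
    by (intros; rewrite fourier_cos_trig_sum, fourier_sin_trig_sum by lia; ring).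
  rewrite Ropp_mult_distr_l, scal_sum, <- sum_plus.
  apply sum_eq; intros; ring.
Qed.

Lemma bessel_term_ge_0 k g a b :
  0 <= (fourier_cos k g ^ 2 + fourier_sin k g ^ 2) / norm2_cos k +
       (a ^ 2 * norm2_cos k + b ^ 2 * norm2_sin k
        - 2 * (a * fourier_cos k g) - 2 * (b * fourier_sin k g)).
Proof.
  pose proof PI_RGT_0.
  destruct k as [|k]; cbn [norm2_cos norm2_sin].
  - rewrite fourier_sin_0.
    replace (_ + _) with ((a * (2 * PI) - fourier_cos 0 g) ^ 2 / (2 * PI)) by (field; lra).
    apply Rdiv_le_0_compat; [apply pow2_ge_0 | lra].
  - replace (_ + _) with (((a * PI - fourier_cos (S k) g) ^ 2
                          + (b * PI - fourier_sin (S k) g) ^ 2) / PI) by (field; lra).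
    apply Rdiv_le_0_compat; [apply Rplus_le_le_0_compat; apply pow2_ge_0 | lra].
Qed.

Lemma bessel_best_approx g N a b : continuous_R g ->
  RInt (fun t => g t ^ 2) 0 (2 * PI) - bessel_sum N g <=
  RInt (fun t => (g t - trig_sum N a b t) ^ 2) 0 (2 * PI).
Proof.
  intros Hg; rewrite RInt_sqr_sub_trig_sum by auto; unfold bessel_sum.
  match goal with |- _ - ?S <= _ + ?S' => assert (0 <= S + S') end; [|lra].
  rewrite <- sum_plus; apply cond_pos_sum; intro k; apply bessel_term_ge_0.
Qed.

Lemma bessel_inequality g N : continuous_R g ->
  bessel_sum N g <= RInt (fun t => g t ^ 2) 0 (2 * PI).
Proof.
  intros Hg; pose proof PI_RGT_0.
  set (a k := fourier_cos k g / norm2_cos k); set (b k := fourier_sin k g / norm2_cos k).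
  assert (H0 : 0 <= RInt (fun t => (g t - trig_sum N a b t) ^ 2) 0 (2 * PI)).
  { apply (RInt_sqr_ge_0 (fun t => g t - trig_sum N a b t)); [lra|].
    pose proof (continuous_R_trig_sum N a b); continuity_R. }
  rewrite RInt_sqr_sub_trig_sum in H0 by auto.
  enough (E : sum_f_R0 (fun k => a k ^ 2 * norm2_cos k + b k ^ 2 * norm2_sin k
              - 2 * (a k * fourier_cos k g) - 2 * (b k * fourier_sin k g)) N = - bessel_sum N g).
  { rewrite E in H0; lra. }
  unfold bessel_sum; rewrite <- (Rmult_1_l (sum_f_R0 (fun k => (_ + _) / _) N)).
  rewrite Ropp_mult_distr_l, scal_sum.
  apply sum_eq; intros k _; unfold a, b.
  destruct k as [|k]; cbn [norm2_cos norm2_sin];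
    [rewrite fourier_sin_0; field | field]; lra.
Qed.

Definition trig_poly (N : nat) (f : R -> R) : Prop :=
  exists a b : nat -> R, forall t, f t = trig_sum N a b t.

Lemma trig_poly_ext N f g : (forall t, f t = g t) -> trig_poly N f -> trig_poly N g.
Proof. intros E [a [b Hf]]; exists a, b; intro t; rewrite <- E; auto. Qed.

Lemma trig_poly_plus N f g : trig_poly N f -> trig_poly N g -> trig_poly N (fun t => f t + g t).
Proof.
  intros [a [b Hf]] [a' [b' Hg]]; exists (fun k => a k + a' k), (fun k => b k + b' k).
  intro t; rewrite Hf, Hg; unfold trig_sum; rewrite <- sum_plus.
  apply sum_eq; intros; ring.
Qed.

Lemma trig_poly_scal N c f : trig_poly N f -> trig_poly N (fun t => c * f t).
Proof.
  intros [a [b Hf]]; exists (fun k => c * a k), (fun k => c * b k).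
  intro t; rewrite Hf; unfold trig_sum; rewrite scal_sum.
  apply sum_eq; intros; ring.
Qed.

Lemma trig_poly_cos N k : (k <= N)%nat -> trig_poly N (fun t => cos (INR k * t)).
Proof.
  intros HkN; exists (fun j => if Nat.eq_dec j k then 1 else 0), (fun _ => 0).
  intro t; unfold trig_sum.
  rewrite (sum_eq _ (fun j => if Nat.eq_dec j k then cos (INR j * t) else 0)).
  - rewrite sum_f_R0_delta; auto.
  - intros j _; destruct (Nat.eq_dec j k); ring.
Qed.

Lemma trig_poly_sin N k : (k <= N)%nat -> trig_poly N (fun t => sin (INR k * t)).
Proof.
  intros HkN; exists (fun _ => 0), (fun j => if Nat.eq_dec j k then 1 else 0).
  intro t; unfold trig_sum.
  rewrite (sum_eq _ (fun j => if Nat.eq_dec j k then sin (INR j * t) else 0)).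
  - rewrite sum_f_R0_delta; auto.
  - intros j _; destruct (Nat.eq_dec j k); ring.
Qed.

Lemma trig_poly_lin_comb N M (a b : nat -> R) (F G : nat -> R -> R) :
  (forall k, (k <= M)%nat -> trig_poly N (F k)) ->
  (forall k, (k <= M)%nat -> trig_poly N (G k)) ->
  trig_poly N (fun t => sum_f_R0 (fun k => a k * F k t + b k * G k t) M).
Proof.
  intros HF HG; induction M as [|M IH]; cbn.
  - apply trig_poly_plus; apply trig_poly_scal; auto.
  - apply trig_poly_plus; [apply IH; auto|].
    apply trig_poly_plus; apply trig_poly_scal; auto.
Qed.

Lemma trig_poly_widen N M f : (N <= M)%nat -> trig_poly N f -> trig_poly M f.
Proof.
  intros HNM [a [b Hf]]; apply (trig_poly_ext _ (trig_sum N a b)); [intro; symmetry; auto|].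
  apply trig_poly_lin_comb; intros; [apply trig_poly_cos | apply trig_poly_sin]; lia.
Qed.

Lemma trig_poly_mult_cos N f : trig_poly N f -> trig_poly (S N) (fun t => cos t * f t).
Proof.
  intros [a [b Hf]].
  apply (trig_poly_ext _ (fun t => sum_f_R0 (fun k =>
    a k * (cos t * cos (INR k * t)) + b k * (cos t * sin (INR k * t))) N)).
  { intro t; rewrite Hf; unfold trig_sum; rewrite scal_sum; apply sum_eq; intros; ring. }
  apply trig_poly_lin_comb; intros [|k] Hk.
  - apply (trig_poly_ext _ (fun t => cos (INR 1 * t))); [|apply trig_poly_cos; lia].
    intro t; cbn [INR]; rewrite Rmult_0_l, Rmult_1_l, cos_0; ring.
  - apply (trig_poly_ext _ (fun t => / 2 * cos (INR (S (S k)) * t) + / 2 * cos (INR k * t))).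
    + intro t; rewrite !S_INR.
      replace ((INR k + 1 + 1) * t) with ((INR k + 1) * t + t) by ring.
      replace (INR k * t) with ((INR k + 1) * t - t) by ring.
      rewrite cos_plus, cos_minus; field.
    + apply trig_poly_plus; apply trig_poly_scal; apply trig_poly_cos; lia.
  - apply (trig_poly_ext _ (fun t => 0 * cos (INR 0 * t)));
      [|apply trig_poly_scal, trig_poly_cos; lia].
    intro t; cbn [INR]; rewrite !Rmult_0_l, sin_0; ring.
  - apply (trig_poly_ext _ (fun t => / 2 * sin (INR (S (S k)) * t) + / 2 * sin (INR k * t))).
    + intro t; rewrite !S_INR.
      replace ((INR k + 1 + 1) * t) with ((INR k + 1) * t + t) by ring.
      replace (INR k * t) with ((INR k + 1) * t - t) by ring.
      rewrite sin_plus, sin_minus; field.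
    + apply trig_poly_plus; apply trig_poly_scal; apply trig_poly_sin; lia.
Qed.

Lemma trig_poly_convolution N g f : continuous_R g -> trig_poly N f ->
  trig_poly N (fun t => RInt (fun v => g v * f (t - v)) 0 (2 * PI)).
Proof.
  intros Hg [a [b Hf]].
  apply (trig_poly_ext _ (fun t => sum_f_R0 (fun k =>
    a k * RInt (fun v => g v * cos (INR k * (t - v))) 0 (2 * PI) +
    b k * RInt (fun v => g v * sin (INR k * (t - v))) 0 (2 * PI)) N)).
  { intro t; symmetry; rewrite (RInt_ext _ (fun v => sum_f_R0 (fun k =>
      a k * (g v * cos (INR k * (t - v))) + b k * (g v * sin (INR k * (t - v)))) N)).
    - rewrite RInt_sum_f_R0 by (intro; continuity_R).
      apply sum_eq; intros k _; rewrite RInt_Rplus, !RInt_Rmult_l by continuity_R; reflexivity.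
    - intros v _; rewrite Hf; unfold trig_sum; rewrite scal_sum; apply sum_eq; intros; R_eq; ring. }
  apply trig_poly_lin_comb; intros k Hk.
  - apply (trig_poly_ext _ (fun t =>
      fourier_cos k g * cos (INR k * t) + fourier_sin k g * sin (INR k * t))).
    + intro t; unfold fourier_cos, fourier_sin.
      rewrite <- !RInt_Rmult_r, <- RInt_Rplus by continuity_R.
      apply RInt_ext; intros v _.
      rewrite Rmult_minus_distr_l, cos_minus; R_eq; ring.
    + apply trig_poly_plus; apply trig_poly_scal; [apply trig_poly_cos | apply trig_poly_sin]; auto.
  - apply (trig_poly_ext _ (fun t =>
      fourier_cos k g * sin (INR k * t) - fourier_sin k g * cos (INR k * t))).
    + intro t; unfold fourier_cos, fourier_sin.
      rewrite <- !RInt_Rmult_r, <- RInt_Rminus by continuity_R.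
      apply RInt_ext; intros v _.
      rewrite Rmult_minus_distr_l, sin_minus; R_eq; ring.
    + apply (trig_poly_ext _ (fun t => fourier_cos k g * sin (INR k * t)
                                     + - fourier_sin k g * cos (INR k * t))); [intro; ring|].
      apply trig_poly_plus; apply trig_poly_scal; [apply trig_poly_sin | apply trig_poly_cos]; auto.
Qed.

(** * Uniform approximation by the Landau kernel *)

(* [cos (u / 2) ^ (2 n)], the trigonometric Landau kernel: its mass concentrates at [u = 0]. *)
Definition landau_kernel (n : nat) (u : R) : R := ((1 + cos u) / 2) ^ n.

Definition landau_mass (n : nat) : R := RInt (landau_kernel n) (- PI) PI.

Definition landau_mean (n : nat) (z : R -> R) (t : R) : R :=
  / landau_mass n * RInt (fun v => z v * landau_kernel n (t - v)) 0 (2 * PI).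

Definition lipschitz_on (a b L : R) (f : R -> R) : Prop :=
  forall x y, a <= x <= b -> a <= y <= b -> Rabs (f x - f y) <= L * Rabs (x - y).

Lemma landau_kernel_ge_0 n u : 0 <= landau_kernel n u.
Proof. apply pow_le; pose proof (COS_bound u); lra. Qed.

Lemma continuous_R_landau_kernel n : continuous_R (landau_kernel n).
Proof. unfold landau_kernel; continuity_R. Qed.

Lemma periodic_landau_kernel n : periodic (landau_kernel n).
Proof.
  intro u; unfold landau_kernel.
  replace (u + 2 * PI) with (u + 2 * INR 1 * PI) by (cbn; ring).
  rewrite cos_period; reflexivity.
Qed.

Lemma trig_poly_landau_kernel n : trig_poly n (landau_kernel n).
Proof.
  induction n as [|n IH].
  - apply (trig_poly_ext _ (fun t => cos (INR 0 * t))); [|apply trig_poly_cos; lia].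
    intro t; cbn; rewrite Rmult_0_l; apply cos_0.
  - apply (trig_poly_ext _ (fun t => / 2 * landau_kernel n t + / 2 * (cos t * landau_kernel n t))).
    + intro t; unfold landau_kernel; cbn; field.
    + apply trig_poly_plus; apply trig_poly_scal;
        [apply (trig_poly_widen n); auto | apply trig_poly_mult_cos; auto].
Qed.

Lemma cos_Rabs x : cos (Rabs x) = cos x.
Proof. destruct (Rcase_abs x); [rewrite Rabs_left, cos_neg | rewrite Rabs_right]; auto. Qed.

Lemma landau_kernel_antitone n x u : Rabs x <= Rabs u <= PI ->
  landau_kernel n u <= landau_kernel n x.
Proof.
  intros Hxu; unfold landau_kernel; apply pow_incr; split.
  - pose proof (COS_bound u); lra.
  - rewrite <- (cos_Rabs u), <- (cos_Rabs x).
    destruct (Req_dec (Rabs x) (Rabs u)) as [<-|Hne]; [lra|].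
    pose proof (cos_decreasing_1 (Rabs x) (Rabs u)); pose proof (Rabs_pos x); lra.
Qed.

Lemma landau_mass_ge n r : 0 < r < PI -> 2 * r * landau_kernel n r <= landau_mass n.
Proof.
  intros Hr; pose proof (continuous_R_landau_kernel n); unfold landau_mass.
  replace (2 * r * landau_kernel n r) with (RInt (fun _ => landau_kernel n r) (- r) r)
    by (rewrite RInt_Rconst; R_eq; ring).
  apply Rle_trans with (RInt (landau_kernel n) (- r) r).
  - apply RInt_le_R; [lra | continuity_R | auto |].
    intros u Hu; apply landau_kernel_antitone; rewrite (Rabs_right r) by lra.
    split; [apply Rabs_le|]; lra.
  - apply RInt_sub_interval; auto; try lra; intros; apply landau_kernel_ge_0.
Qed.

Lemma landau_first_moment n eta : 0 < eta <= PI ->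
  RInt (fun u => Rabs u * landau_kernel n u) (- PI) PI <=
  eta * landau_mass n + 2 * PI ^ 2 * landau_kernel n eta.
Proof.
  intros Heta; pose proof (continuous_R_landau_kernel n); pose proof PI_RGT_0.
  unfold landau_mass; rewrite <- RInt_Rmult_l by auto.
  replace (2 * PI ^ 2 * landau_kernel n eta)
    with (RInt (fun _ => PI * landau_kernel n eta) (- PI) PI) by (rewrite RInt_Rconst; R_eq; ring).
  rewrite <- RInt_Rplus by continuity_R.
  apply RInt_le_R; [lra | continuity_R | continuity_R |].
  intros u Hu; pose proof (landau_kernel_ge_0 n u); pose proof (landau_kernel_ge_0 n eta).
  assert (Hu' : Rabs u <= PI) by (apply Rabs_le; lra).
  destruct (Rle_lt_dec (Rabs u) eta).
  - assert (Rabs u * landau_kernel n u <= eta * landau_kernel n u)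
      by (apply Rmult_le_compat_r; auto).
    nra.
  - assert (landau_kernel n u <= landau_kernel n eta).
    { apply landau_kernel_antitone; rewrite (Rabs_right eta) by lra; lra. }
    pose proof (Rabs_pos u); nra.
Qed.

Lemma trig_poly_landau_mean n z : continuous_R z -> trig_poly n (landau_mean n z).
Proof.
  intros Hz; apply trig_poly_scal, trig_poly_convolution; auto.
  apply trig_poly_landau_kernel.
Qed.

Lemma landau_mean_error z L n eta t : continuous_R z -> periodic z -> 0 <= L ->
  lipschitz_on (- PI) (3 * PI) L z -> 0 <= t <= 2 * PI -> 0 < eta <= PI -> 0 < landau_mass n ->
  Rabs (z t - landau_mean n z t) <=
  L * eta + L * (2 * PI ^ 2 * landau_kernel n eta) / landau_mass n.
Proof.
  intros Hz Pz HL Lip Ht Heta HI; pose proof PI_RGT_0.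
  pose proof (continuous_R_landau_kernel n) as HK.
  set (I := landau_mass n) in *.
  set (w u := z (t - u) * landau_kernel n u).
  assert (Hw : continuous_R w) by (unfold w; cbv beta; continuity_R).
  assert (Pw : periodic w).
  { intro u; unfold w; cbv beta; rewrite periodic_landau_kernel, <- (Pz (t - (u + 2 * PI))).
    f_equal; f_equal; ring. }
  assert (Ew : RInt (fun v => z v * landau_kernel n (t - v)) 0 (2 * PI) = RInt w (- PI) PI).
  { rewrite (RInt_ext _ (fun v => w (t - v))) by (intros; unfold w; cbv beta; do 2 f_equal; ring).
    rewrite RInt_periodic_reflect, <- (RInt_periodic_window w (- PI)) by auto.
    f_equal; ring. }
  assert (Ed : z t - landau_mean n z t =
               / I * RInt (fun u => (z t - z (t - u)) * landau_kernel n u) (- PI) PI).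
  { unfold landau_mean; fold I; rewrite Ew.
    rewrite (RInt_ext (fun u => (z t - z (t - u)) * landau_kernel n u)
                      (fun u => z t * landau_kernel n u - w u))
      by (intros; unfold w; cbv beta; R_eq; ring).
    rewrite RInt_Rminus, RInt_Rmult_l by continuity_R.
    change (RInt (landau_kernel n) (- PI) PI) with I; field; lra. }
  rewrite Ed, Rabs_mult, Rabs_right by (apply Rle_ge, Rlt_le, Rinv_0_lt_compat; auto).
  apply Rle_trans with (/ I * (L * (eta * I + 2 * PI ^ 2 * landau_kernel n eta)));
    [|right; field; lra].
  apply Rmult_le_compat_l; [apply Rlt_le, Rinv_0_lt_compat; auto|].
  eapply Rle_trans; [apply abs_RInt_le_R; [lra | continuity_R]|].
  eapply Rle_trans; [|apply Rmult_le_compat_l; [auto | apply landau_first_moment; auto]].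
  rewrite <- RInt_Rmult_l by continuity_R.
  apply RInt_le_R; [lra | continuity_R | continuity_R |].
  intros u Hu; rewrite Rabs_mult, (Rabs_right (landau_kernel n u))
    by (apply Rle_ge, landau_kernel_ge_0).
  rewrite <- Rmult_assoc; apply Rmult_le_compat_r; [apply landau_kernel_ge_0|].
  replace (Rabs u) with (Rabs (t - (t - u))) by (f_equal; ring).
  apply Lip; lra.
Qed.

Lemma landau_tail_vanishes eta eps : 0 < eta < PI -> 0 < eps ->
  exists n, 0 < landau_mass n /\ 2 * PI ^ 2 * landau_kernel n eta / landau_mass n <= eps.
Proof.
  intros Heta Heps; pose proof PI_RGT_0.
  set (r := eta / 2); set (q := (1 + cos eta) / 2); set (q' := (1 + cos r) / 2).
  assert (Hq : 0 <= q) by (unfold q; pose proof (COS_bound eta); lra).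
  assert (Hqq' : q < q') by (unfold q, q'; pose proof (cos_decreasing_1 r eta); unfold r in *; lra).
  assert (Hratio : Rabs (q / q') < 1).
  { rewrite Rabs_right by (apply Rle_ge, Rdiv_le_0_compat; lra).
    apply Rlt_div_l; lra. }
  assert (Hy : 0 < eps * r / PI ^ 2)
    by (unfold r; apply Rdiv_lt_0_compat; [nra | apply pow_lt; lra]).
  destruct (pow_lt_1_zero _ Hratio _ Hy) as [n Hn]; specialize (Hn n (le_n n)).
  rewrite Rabs_right in Hn by (apply Rle_ge, pow_le, Rdiv_le_0_compat; lra).
  assert (Hmass := landau_mass_ge n r); unfold landau_kernel in Hmass |- *; fold q q' in Hmass |- *.
  assert (Hq'n : 0 < q' ^ n) by (apply pow_lt; lra).
  assert (Hr : 0 < r < PI) by (unfold r; lra).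
  assert (Hpos : 0 < 2 * r * q' ^ n) by nra.
  exists n; split; [lra|].
  apply Rle_trans with (2 * PI ^ 2 * q ^ n / (2 * r * q' ^ n)).
  - apply Rmult_le_compat_l; [apply Rmult_le_pos; [nra | apply pow_le; lra]|].
    apply Rinv_le_contravar; lra.
  - unfold Rdiv at 1 in Hn; rewrite Rpow_mult_distr in Hn.
    replace (2 * PI ^ 2 * q ^ n / (2 * r * q' ^ n)) with (PI ^ 2 * (q ^ n * / q' ^ n) / r)
      by (field; lra).
    rewrite pow_inv in Hn.
    apply Rle_div_l; [lra|].
    apply Rmult_lt_compat_l with (r := PI ^ 2) in Hn; [|apply pow_lt; lra].
    replace (PI ^ 2 * (eps * r / PI ^ 2)) with (eps * r) in Hn by (field; lra); lra.
Qed.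

Lemma landau_mean_uniform_approx z L e : continuous_R z -> periodic z -> 0 <= L ->
  lipschitz_on (- PI) (3 * PI) L z -> 0 < e ->
  exists n, forall t, 0 <= t <= 2 * PI -> Rabs (z t - landau_mean n z t) <= e.
Proof.
  intros Hz Pz HL Lip He; pose proof PI2_1.
  set (eps := e / (2 * (L + 1))).
  assert (Heps : 0 < eps) by (unfold eps; apply Rdiv_lt_0_compat; lra).
  assert (HLeps : L * eps <= e / 2).
  { assert (HL1 : L / (L + 1) <= 1).
    { apply Rmult_le_reg_r with (L + 1); [lra|].
      unfold Rdiv; rewrite Rmult_assoc, Rinv_l; lra. }
    replace (L * eps) with (e / 2 * (L / (L + 1))) by (unfold eps; field; lra).
    nra. }
  set (eta := Rmin 1 eps).
  assert (Heta : 0 < eta <= 1) by (split; [apply Rmin_glb_lt | apply Rmin_l]; lra).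
  assert (HLeta : L * eta <= e / 2).
  { apply Rle_trans with (L * eps); auto; apply Rmult_le_compat_l; [lra | apply Rmin_r]. }
  destruct (landau_tail_vanishes eta eps ltac:(lra) Heps) as [n [Hmass Htail]].
  exists n; intros t Ht.
  apply Rle_trans with (L * eta + L * (2 * PI ^ 2 * landau_kernel n eta) / landau_mass n);
    [apply landau_mean_error; auto; lra|].
  assert (L * (2 * PI ^ 2 * landau_kernel n eta) / landau_mass n <= L * eps).
  { unfold Rdiv; rewrite Rmult_assoc; apply Rmult_le_compat_l; auto. }
  lra.
Qed.

Lemma bessel_sum_approx z L eps : continuous_R z -> periodic z -> 0 <= L ->
  lipschitz_on (- PI) (3 * PI) L z -> 0 < eps ->
  exists N, RInt (fun t => z t ^ 2) 0 (2 * PI) - bessel_sum N z <= eps.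
Proof.
  intros Hz Pz HL Lip Heps; pose proof PI_RGT_0.
  set (e := sqrt (eps / (2 * PI))).
  assert (He : 0 < e) by (apply sqrt_lt_R0, Rdiv_lt_0_compat; lra).
  destruct (landau_mean_uniform_approx z L e) as [n Hn]; auto.
  destruct (trig_poly_landau_mean n z Hz) as [a [b Hab]].
  exists n; eapply Rle_trans; [apply (bessel_best_approx z n a b); auto|].
  apply Rle_trans with (RInt (fun _ => e ^ 2) 0 (2 * PI)).
  - pose proof (continuous_R_trig_sum n a b).
    apply RInt_le_R; [lra | continuity_R | continuity_R |].
    intros t Ht; rewrite <- Hab, <- (pow2_abs (z t - _)).
    apply pow_incr; split; [apply Rabs_pos | auto].
  - rewrite RInt_Rconst; unfold e; rewrite pow2_sqrt by (apply Rdiv_le_0_compat; lra).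
    right; field; lra.
Qed.

Lemma lipschitz_on_derive (z dz : R -> R) a b : a <= b ->
  (forall t, is_derive z t (dz t)) -> continuous_R dz ->
  exists L, 0 <= L /\ lipschitz_on a b L z.
Proof.
  intros Hab Hd Hdz.
  destruct (continuity_ab_maj (fun t => Rabs (dz t)) a b) as [M [HM _]]; auto.
  { intros; apply continuity_pt_filterlim; apply (continuous_R_comp dz Rabs); continuity_R. }
  exists (Rabs (dz M)); split; [apply Rabs_pos|].
  intros x y Hx Hy.
  destruct (MVT_gen z y x dz) as [c [Hc E]].
  - intros; apply Hd.
  - intros; apply continuity_pt_filterlim, (continuous_R_derive z dz Hd).
  - rewrite E, Rabs_mult; apply Rmult_le_compat_r; [apply Rabs_pos|].
    apply HM; split;
      [apply Rle_trans with (Rmin y x); [apply Rmin_glb|]; lra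
      |apply Rle_trans with (Rmax y x); [|apply Rmax_lub]; lra].
Qed.

(** * The delay operator [z |-> z' + c z(. - s)] *)

Lemma fourier_cos_shift z s k : continuous_R z -> periodic z ->
  fourier_cos k (fun t => z (t - s)) =
  cos (INR k * s) * fourier_cos k z - sin (INR k * s) * fourier_sin k z.
Proof.
  intros Hz Pz; unfold fourier_cos, fourier_sin.
  set (h u := z u * cos (INR k * u + INR k * s)).
  assert (Ph : periodic h).
  { intro u; unfold h; cbv beta; rewrite Pz, <- (cos_period (INR k * u + INR k * s) k).
    do 2 f_equal; ring. }
  rewrite (RInt_ext _ (fun t => h (t + - s))) by (intros; unfold h; cbv beta; do 2 f_equal; ring).
  rewrite RInt_periodic_translate by (auto; unfold h; cbv beta; continuity_R).
  rewrite (RInt_ext h (fun u => cos (INR k * s) * (z u * cos (INR k * u))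
                                - sin (INR k * s) * (z u * sin (INR k * u))))
    by (intros u _; unfold h; rewrite cos_plus; R_eq; ring).
  rewrite RInt_Rminus, !RInt_Rmult_l by continuity_R; reflexivity.
Qed.

Lemma fourier_sin_shift z s k : continuous_R z -> periodic z ->
  fourier_sin k (fun t => z (t - s)) =
  sin (INR k * s) * fourier_cos k z + cos (INR k * s) * fourier_sin k z.
Proof.
  intros Hz Pz; unfold fourier_cos, fourier_sin.
  set (h u := z u * sin (INR k * u + INR k * s)).
  assert (Ph : periodic h).
  { intro u; unfold h; cbv beta; rewrite Pz, <- (sin_period (INR k * u + INR k * s) k).
    do 2 f_equal; ring. }
  rewrite (RInt_ext _ (fun t => h (t + - s))) by (intros; unfold h; cbv beta; do 2 f_equal; ring).
  rewrite RInt_periodic_translate by (auto; unfold h; cbv beta; continuity_R).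
  rewrite (RInt_ext h (fun u => sin (INR k * s) * (z u * cos (INR k * u))
                                + cos (INR k * s) * (z u * sin (INR k * u))))
    by (intros u _; unfold h; rewrite sin_plus; R_eq; ring).
  rewrite RInt_Rplus, !RInt_Rmult_l by continuity_R; reflexivity.
Qed.

(* [|i k + c e^(- i k s)|^2]: the symbol at frequency [k] of [z |-> z' + c z(. - s)]. *)
Definition delay_symbol (k : nat) (c s : R) : R :=
  INR k ^ 2 - 2 * INR k * c * sin (INR k * s) + c ^ 2.

Section DelayOperator.

Variables (z dz : R -> R).
Hypotheses (Hd : forall t, is_derive z t (dz t)) (Hdz : continuous_R dz) (Pz : periodic z).

Let Hz : continuous_R z := continuous_R_derive z dz Hd.

Lemma fourier_cos_derive k : fourier_cos k dz = INR k * fourier_sin k z.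
Proof.
  unfold fourier_cos, fourier_sin.
  assert (E : RInt (fun t => dz t * cos (INR k * t) - INR k * (z t * sin (INR k * t))) 0 (2 * PI)
              = 0).
  { rewrite (RInt_derive_R (fun t => z t * cos (INR k * t))).
    - rewrite <- (Pz 0), Rplus_0_l, cos_INR_2PI, Rmult_0_r, cos_0; R_eq; ring.
    - intro t; auto_derive; [apply (ex_intro _ _ (Hd t)) | ].
      replace (Derive (fun x => z x) t) with (dz t) by (symmetry; apply is_derive_unique, Hd).
      ring.
    - continuity_R. }
  rewrite RInt_Rminus, RInt_Rmult_l in E by continuity_R; lra.
Qed.

Lemma fourier_sin_derive k : fourier_sin k dz = - (INR k * fourier_cos k z).
Proof.
  unfold fourier_cos, fourier_sin.
  assert (E : RInt (fun t => dz t * sin (INR k * t) + INR k * (z t * cos (INR k * t))) 0 (2 * PI)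
              = 0).
  { rewrite (RInt_derive_R (fun t => z t * sin (INR k * t))).
    - rewrite <- (Pz 0), Rplus_0_l, sin_INR_2PI, (Rmult_0_r (INR k)), sin_0; R_eq; ring.
    - intro t; auto_derive; [apply (ex_intro _ _ (Hd t)) | ].
      replace (Derive (fun x => z x) t) with (dz t) by (symmetry; apply is_derive_unique, Hd).
      ring.
    - continuity_R. }
  rewrite RInt_Rplus, RInt_Rmult_l in E by continuity_R; lra.
Qed.

Lemma fourier_delay_operator c s k :
  let f t := dz t + c * z (t - s) in
  fourier_cos k f ^ 2 + fourier_sin k f ^ 2 =
  delay_symbol k c s * (fourier_cos k z ^ 2 + fourier_sin k z ^ 2).
Proof.
  intros f.
  assert (Ea : fourier_cos k f = fourier_cos k dz + c * fourier_cos k (fun t => z (t - s))).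
  { unfold fourier_cos, f.
    rewrite (RInt_ext _ (fun t => dz t * cos (INR k * t) + c * (z (t - s) * cos (INR k * t))))
      by (intros; R_eq; ring).
    rewrite RInt_Rplus, RInt_Rmult_l by continuity_R; reflexivity. }
  assert (Eb : fourier_sin k f = fourier_sin k dz + c * fourier_sin k (fun t => z (t - s))).
  { unfold fourier_sin, f.
    rewrite (RInt_ext _ (fun t => dz t * sin (INR k * t) + c * (z (t - s) * sin (INR k * t))))
      by (intros; R_eq; ring).
    rewrite RInt_Rplus, RInt_Rmult_l by continuity_R; reflexivity. }
  rewrite Ea, Eb, fourier_cos_derive, fourier_sin_derive, fourier_cos_shift, fourier_sin_shift
    by auto.
  unfold delay_symbol; pose proof (sin2_cos2 (INR k * s)) as E; unfold Rsqr in E.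
  replace (c ^ 2)
    with (c ^ 2 * (sin (INR k * s) * sin (INR k * s) + cos (INR k * s) * cos (INR k * s)))
    by (rewrite E; ring).
  ring.
Qed.

Lemma delay_operator_coercive c s d : 0 <= d -> (forall k, d <= delay_symbol k c s) ->
  d * RInt (fun t => z t ^ 2) 0 (2 * PI) <=
  RInt (fun t => (dz t + c * z (t - s)) ^ 2) 0 (2 * PI).
Proof.
  intros Hd0 Hsym; pose proof PI_RGT_0.
  destruct (lipschitz_on_derive z dz (- PI) (3 * PI)) as [L [HL Lip]]; auto; [lra|].
  set (f t := dz t + c * z (t - s)).
  apply Rle_plus_epsilon; intros eps Heps.
  destruct (bessel_sum_approx z L (eps / (d + 1))) as [N HN]; auto.
  { apply Rdiv_lt_0_compat; lra. }
  assert (Hbessel : d * bessel_sum N z <= bessel_sum N f).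
  { unfold bessel_sum; rewrite scal_sum; apply sum_Rle; intros k _.
    unfold f; rewrite fourier_delay_operator.
    pose proof (norm2_cos_pos k); pose proof (pow2_ge_0 (fourier_cos k z));
      pose proof (pow2_ge_0 (fourier_sin k z)).
    unfold Rdiv; rewrite Rmult_assoc, (Rmult_comm _ d), <- Rmult_assoc.
    apply Rmult_le_compat_r; [apply Rlt_le, Rinv_0_lt_compat; auto|].
    rewrite Rmult_comm; apply Rmult_le_compat_r; [lra | auto]. }
  assert (Hf : bessel_sum N f <= RInt (fun t => f t ^ 2) 0 (2 * PI))
    by (apply bessel_inequality; unfold f; continuity_R).
  assert (d * (eps / (d + 1)) <= eps).
  { unfold Rdiv; rewrite <- Rmult_assoc; apply Rle_trans with ((d + 1) * eps * / (d + 1));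
      [apply Rmult_le_compat_r; [apply Rlt_le, Rinv_0_lt_compat |]; nra | right; field]; lra. }
  assert (d * (RInt (fun t => z t ^ 2) 0 (2 * PI) - bessel_sum N z) <= d * (eps / (d + 1)))
    by (apply Rmult_le_compat_l; auto).
  unfold f in Hf, Hbessel; cbv beta in Hf, Hbessel; lra.
Qed.

End DelayOperator.

Lemma Rabs_sin_sub_le x y : Rabs (sin x - sin y) <= Rabs (x - y).
Proof.
  destruct (MVT_gen sin y x cos) as [c [_ Hc]].
  - intros; apply is_derive_sin.
  - intros; apply continuity_sin.
  - rewrite Hc, Rabs_mult.
    pose proof (Rabs_pos (x - y)); pose proof (COS_bound c).
    assert (Rabs (cos c) <= 1) by (apply Rabs_le; lra).
    nra.
Qed.

Lemma delay_symbol_lower_bound k c s : 0 < c -> 0 < s -> sin (c * s) < 1 ->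
  let eta := 1 - sin (c * s) in
  Rmin (c ^ 2) (Rmin ((eta / (2 * s)) ^ 2) (c * eta)) <= delay_symbol k c s.
Proof.
  intros Hc Hs Hsin eta.
  unfold delay_symbol; destruct k as [|k].
  - apply Rle_trans with (c ^ 2); [apply Rmin_l | cbn [INR]; lra].
  - set (K := INR (S k)).
    assert (HK : 1 <= K) by (unfold K; rewrite S_INR; pose proof (pos_INR k); lra).
    replace (K ^ 2 - 2 * K * c * sin (K * s) + c ^ 2)
      with ((K - c) ^ 2 + 2 * K * c * (1 - sin (K * s))) by ring.
    (* The two sines differ by at most [s |K - c|], so either [K s] stays where [sin < 1]
       or [K] is far from [c]. *)
    pose proof (Rabs_sin_sub_le (K * s) (c * s)) as Hlip.
    replace (K * s - c * s) with (s * (K - c)) in Hlip by ring.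
    rewrite Rabs_mult, (Rabs_right s) in Hlip by lra.
    pose proof (SIN_bound (K * s)); pose proof (pow2_ge_0 (K - c)).
    destruct (Rle_lt_dec (s * Rabs (K - c)) (eta / 2)) as [Hnear|Hfar].
    + apply Rle_trans with (c * eta);
        [apply Rle_trans with (Rmin ((eta / (2 * s)) ^ 2) (c * eta)); apply Rmin_r|].
      assert (Hsk : eta / 2 <= 1 - sin (K * s)).
      { pose proof (Rle_abs (sin (K * s) - sin (c * s))); unfold eta in *; lra. }
      assert (0 < eta) by (unfold eta; lra).
      assert (2 * K * c * (eta / 2) <= 2 * K * c * (1 - sin (K * s)))
        by (apply Rmult_le_compat_l; nra).
      assert (c * eta <= K * (c * eta))
        by (rewrite <- (Rmult_1_l (c * eta)) at 1; apply Rmult_le_compat_r; nra).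
      nra.
    + apply Rle_trans with ((eta / (2 * s)) ^ 2);
        [apply Rle_trans with (Rmin ((eta / (2 * s)) ^ 2) (c * eta));
           [apply Rmin_r | apply Rmin_l]|].
      assert (eta / (2 * s) <= Rabs (K - c)).
      { apply Rle_div_l; lra. }
      assert (0 <= eta / (2 * s)) by (apply Rdiv_le_0_compat; unfold eta; lra).
      rewrite <- (pow2_abs (K - c)).
      assert ((eta / (2 * s)) ^ 2 <= Rabs (K - c) ^ 2) by (apply pow_incr; lra).
      assert (0 <= 2 * K * c * (1 - sin (K * s))) by (apply Rmult_le_pos; nra).
      lra.
Qed.

Definition delay_symbol_floor (mu tau l1 : R) : R :=
  Rmin ((l1 * mu) ^ 2)
       (Rmin (((1 - sin (mu * tau)) * l1 / (2 * tau)) ^ 2) (l1 * mu * (1 - sin (mu * tau)))).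

Lemma delay_symbol_floor_pos mu tau l1 : 0 < mu -> 0 < tau -> 0 < l1 -> sin (mu * tau) < 1 ->
  0 < delay_symbol_floor mu tau l1.
Proof.
  intros; unfold delay_symbol_floor; repeat apply Rmin_glb_lt.
  - apply pow_lt; nra.
  - apply pow_lt, Rdiv_lt_0_compat; nra.
  - assert (0 < l1 * mu) by nra; nra.
Qed.

Lemma delay_symbol_ge_floor mu tau l1 l k : 0 < mu -> 0 < tau -> 0 < l1 <= l ->
  sin (mu * tau) < 1 -> delay_symbol_floor mu tau l1 <= delay_symbol k (l * mu) (tau / l).
Proof.
  intros Hmu Htau Hl Hsin.
  assert (Hcs : l * mu * (tau / l) = mu * tau) by (field; lra).
  eapply Rle_trans;
    [|apply delay_symbol_lower_bound; [nra | apply Rdiv_lt_0_compat | rewrite Hcs]; lra].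
  cbv zeta; rewrite Hcs; unfold delay_symbol_floor.
  assert (H1 : l1 * mu <= l * mu) by nra.
  apply Rle_trans with (Rmin ((l1 * mu) ^ 2)
    (Rmin (((1 - sin (mu * tau)) / (2 * (tau / l))) ^ 2) (l * mu * (1 - sin (mu * tau))))).
  - apply Rle_min_compat_l, Rmin_glb;
      [eapply Rle_trans; [apply Rmin_l|] | eapply Rle_trans; [apply Rmin_r|]].
    + apply pow_incr; split; [apply Rdiv_le_0_compat; [apply Rmult_le_pos|]; lra|].
      replace ((1 - sin (mu * tau)) / (2 * (tau / l))) with ((1 - sin (mu * tau)) * l / (2 * tau))
        by (field; lra).
      unfold Rdiv; apply Rmult_le_compat_r;
        [apply Rlt_le, Rinv_0_lt_compat; lra | apply Rmult_le_compat_l; lra].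
    + apply Rmult_le_compat_r; lra.
  - apply Rle_min_compat_r, pow_incr; nra.
Qed.

Lemma RInt_cauchy_schwarz g a b : a <= b -> continuous_R g ->
  RInt g a b ^ 2 <= (b - a) * RInt (fun t => g t ^ 2) a b.
Proof.
  intros Hab Hg; destruct (Req_dec a b) as [<-|Hne].
  - rewrite (RInt_point a g : RInt g a a = 0), Rminus_diag; lra.
  - set (c := RInt g a b / (b - a)).
    assert (H0 : 0 <= RInt (fun t => (g t - c) ^ 2) a b)
      by (apply RInt_sqr_ge_0; auto; continuity_R).
    rewrite (RInt_ext _ (fun t => g t ^ 2 - 2 * c * g t + c ^ 2)) in H0 by (intros; R_eq; ring).
    rewrite RInt_Rplus, RInt_Rminus, RInt_Rmult_l, RInt_Rconst in H0 by continuity_R.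
    unfold c in H0.
    replace (RInt (fun t => g t ^ 2) a b - 2 * (RInt g a b / (b - a)) * RInt g a b
             + (b - a) * (RInt g a b / (b - a)) ^ 2)
      with (RInt (fun t => g t ^ 2) a b - RInt g a b ^ 2 / (b - a)) in H0 by (field; lra).
    apply Rmult_le_compat_l with (r := b - a) in H0; [|lra].
    replace ((b - a) * (RInt (fun t => g t ^ 2) a b - RInt g a b ^ 2 / (b - a)))
      with ((b - a) * RInt (fun t => g t ^ 2) a b - RInt g a b ^ 2) in H0 by (field; lra).
    lra.
Qed.

Lemma zero_mean_abs_le (x dx : R -> R) t : (forall u, is_derive x u (dx u)) -> continuous_R dx ->
  RInt x 0 (2 * PI) = 0 -> 0 <= t <= 2 * PI ->
  Rabs (x t) <= RInt (fun u => Rabs (dx u)) 0 (2 * PI).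
Proof.
  intros Hd Hdx Hmean Ht; pose proof PI_RGT_0.
  pose proof (continuous_R_derive x dx Hd) as Hx.
  set (A := RInt (fun u => Rabs (dx u)) 0 (2 * PI)).
  assert (Hosc : forall u, 0 <= u <= 2 * PI -> Rabs (x t - x u) <= A).
  { intros u Hu; rewrite <- (RInt_derive_R x dx u t) by auto.
    destruct (Rle_lt_dec u t).
    - eapply Rle_trans; [apply abs_RInt_le_R; auto|].
      apply RInt_sub_interval; try lra; [continuity_R | intros; apply Rabs_pos].
    - rewrite RInt_swap_R, Rabs_Ropp by auto.
      eapply Rle_trans; [apply abs_RInt_le_R; [lra | auto]|].
      apply RInt_sub_interval; try lra; [continuity_R | intros; apply Rabs_pos]. }
  assert (E : x t = / (2 * PI) * RInt (fun u => x t - x u) 0 (2 * PI)).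
  { rewrite RInt_Rminus, RInt_Rconst, Hmean by continuity_R; field; lra. }
  rewrite E, Rabs_mult, Rabs_right by (apply Rle_ge, Rlt_le, Rinv_0_lt_compat; lra).
  apply Rle_trans with (/ (2 * PI) * RInt (fun _ => A) 0 (2 * PI)).
  - apply Rmult_le_compat_l; [apply Rlt_le, Rinv_0_lt_compat; lra|].
    eapply Rle_trans; [apply abs_RInt_le_R; [lra | continuity_R]|].
    apply RInt_le_R; [lra | continuity_R | continuity_R | auto].
  - rewrite RInt_Rconst; right; field; lra.
Qed.

Lemma zero_mean_abs_le_Ehat_norm (x dx : R -> R) t :
  (forall u, is_derive x u (dx u)) -> continuous_R dx ->
  RInt x 0 (2 * PI) = 0 -> 0 <= t <= 2 * PI -> Rabs (x t) <= sqrt (2 * PI) * Ehat_norm x.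
Proof.
  intros Hd Hdx Hmean Ht; pose proof PI_RGT_0.
  pose proof (continuous_R_derive x dx Hd) as Hx.
  set (A := RInt (fun u => Rabs (dx u)) 0 (2 * PI)).
  assert (HA : 0 <= A) by (apply RInt_ge_0_R; [lra | continuity_R | intros; apply Rabs_pos]).
  assert (HA2 : A ^ 2 <= 2 * PI * RInt (fun u => dx u ^ 2) 0 (2 * PI)).
  { replace (2 * PI) with (2 * PI - 0) at 1 by ring.
    rewrite (RInt_ext (fun u => dx u ^ 2) (fun u => Rabs (dx u) ^ 2))
      by (intros; rewrite pow2_abs; reflexivity).
    apply RInt_cauchy_schwarz; [lra | continuity_R]. }
  assert (Hnorm : RInt (fun u => dx u ^ 2) 0 (2 * PI) <= Ehat_norm x ^ 2).
  { unfold Ehat_norm.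
    rewrite (RInt_ext (fun t => Derive x t ^ 2 + x t ^ 2) (fun t => dx t ^ 2 + x t ^ 2))
      by (intros u _; rewrite (is_derive_unique x u (dx u) (Hd u)); reflexivity).
    rewrite pow2_sqrt by (apply RInt_ge_0_R; [lra | continuity_R | intros; nra]).
    apply RInt_le_R; [lra | continuity_R | continuity_R | intros; nra]. }
  eapply Rle_trans; [apply (zero_mean_abs_le x dx t); auto|].
  fold A; rewrite <- (sqrt_pow2 A HA), <- (sqrt_pow2 (Ehat_norm x))
    by (unfold Ehat_norm; apply sqrt_pos).
  rewrite <- sqrt_mult by (lra || apply pow2_ge_0).
  apply sqrt_le_1_alt; pose proof PI_RGT_0; nra.
Qed.

(** * The system (P) *)

Definition in_window (n : nat) (x : R) : Prop :=
  PI / 2 + 2 * INR n * PI < x < PI / 2 + 2 * (INR n + 1) * PI.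

Lemma sin_lt_1_in_window n x : in_window n x -> sin x < 1.
Proof.
  intros [H1 H2]; set (phi := x - PI / 2 - 2 * INR n * PI).
  replace x with (PI / 2 + phi + 2 * INR n * PI) by (unfold phi; ring).
  rewrite sin_period, sin_plus, sin_PI2, cos_PI2.
  replace phi with (2 * (phi / 2)) by field; rewrite cos_2a_sin.
  assert (0 < sin (phi / 2)) by (apply sin_gt_0; unfold phi; lra).
  nra.
Qed.

Lemma in_window_unique n1 n2 x : in_window n1 x -> in_window n2 x -> n1 = n2.
Proof.
  intros [H1 H2] [H3 H4]; pose proof PI_RGT_0.
  assert (G1 : INR n1 < INR n2 + 1) by nra; assert (G2 : INR n2 < INR n1 + 1) by nra.
  rewrite <- S_INR in G1, G2; apply INR_lt in G1; apply INR_lt in G2; lia.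
Qed.

Lemma is_eigenvalue2_char m11 m12 m21 m22 mu : is_eigenvalue2 m11 m12 m21 m22 mu ->
  (m11 - mu) * (m22 - mu) - m12 * m21 = 0.
Proof.
  intros [v1 [v2 [Hv [E1 E2]]]].
  assert (A1 : ((m11 - mu) * (m22 - mu) - m12 * m21) * v1 = 0).
  { transitivity ((m22 - mu) * (m11 * v1 + m12 * v2 - mu * v1)
                  - m12 * (m21 * v1 + m22 * v2 - mu * v2)); [ring | rewrite E1, E2; ring]. }
  assert (A2 : ((m11 - mu) * (m22 - mu) - m12 * m21) * v2 = 0).
  { transitivity ((m11 - mu) * (m21 * v1 + m22 * v2 - mu * v2)
                  - m21 * (m11 * v1 + m12 * v2 - mu * v1)); [ring | rewrite E1, E2; ring]. }
  destruct Hv as [Hv | Hv]; [apply Rmult_integral in A1 | apply Rmult_integral in A2]; tauto.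
Qed.

Lemma cauchy_schwarz_2 a b u v : (a * u + b * v) ^ 2 <= (a ^ 2 + b ^ 2) * (u ^ 2 + v ^ 2).
Proof.
  assert (E : (a ^ 2 + b ^ 2) * (u ^ 2 + v ^ 2) - (a * u + b * v) ^ 2 = (a * v - b * u) ^ 2)
    by ring.
  pose proof (pow2_ge_0 (a * v - b * u)); lra.
Qed.

Lemma sqr_norm_le_of_det m11 m12 m21 m22 : m11 * m22 - m12 * m21 <> 0 ->
  exists C, 0 <= C /\ forall y1 y2,
    y1 ^ 2 + y2 ^ 2 <= C * ((m11 * y1 + m12 * y2) ^ 2 + (m21 * y1 + m22 * y2) ^ 2).
Proof.
  intros Hdet; set (D := m11 * m22 - m12 * m21).
  exists ((m22 ^ 2 + m12 ^ 2 + (m21 ^ 2 + m11 ^ 2)) / D ^ 2); split.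
  { apply Rdiv_le_0_compat; [|apply pow2_gt_0; auto].
    pose proof (pow2_ge_0 m11); pose proof (pow2_ge_0 m12); pose proof (pow2_ge_0 m21);
      pose proof (pow2_ge_0 m22); lra. }
  intros y1 y2; set (w1 := m11 * y1 + m12 * y2); set (w2 := m21 * y1 + m22 * y2).
  (* Cramer's rule expresses [y] through [w]. *)
  assert (Hy1 : y1 = m22 / D * w1 + - m12 / D * w2) by (unfold w1, w2, D; field; auto).
  assert (Hy2 : y2 = - m21 / D * w1 + m11 / D * w2) by (unfold w1, w2, D; field; auto).
  pose proof (cauchy_schwarz_2 (m22 / D) (- m12 / D) w1 w2) as C1.
  pose proof (cauchy_schwarz_2 (- m21 / D) (m11 / D) w1 w2) as C2.
  rewrite <- Hy1 in C1; rewrite <- Hy2 in C2.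
  replace ((m22 ^ 2 + m12 ^ 2 + (m21 ^ 2 + m11 ^ 2)) / D ^ 2 * (w1 ^ 2 + w2 ^ 2))
    with (((m22 / D) ^ 2 + (- m12 / D) ^ 2) * (w1 ^ 2 + w2 ^ 2)
          + ((- m21 / D) ^ 2 + (m11 / D) ^ 2) * (w1 ^ 2 + w2 ^ 2)) by (field; auto).
  lra.
Qed.

(* [(b2 a22 - mu, - b1 a12)] is a left eigenvector of [[b1 a11, b1 a12; b2 a21, b2 a22]] for
   the eigenvalue [mu]. *)
Definition eigen_form (a12 a22 b1 b2 mu y1 y2 : R) : R := (b2 * a22 - mu) * y1 - b1 * a12 * y2.

Lemma eigen_form_eq_0 a12 a22 b1 b2 mu1 mu2 y1 y2 : mu1 <> mu2 -> b1 * a12 <> 0 ->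
  eigen_form a12 a22 b1 b2 mu1 y1 y2 = 0 -> eigen_form a12 a22 b1 b2 mu2 y1 y2 = 0 ->
  y1 = 0 /\ y2 = 0.
Proof.
  unfold eigen_form; intros Hmu HB Z1 Z2.
  assert (Hy1 : y1 = 0).
  { assert (Hy : (mu2 - mu1) * y1 = 0) by lra.
    apply Rmult_integral in Hy; destruct Hy; [lra | auto]. }
  split; auto; rewrite Hy1 in Z1.
  assert (Hy : b1 * a12 * y2 = 0) by lra.
  apply Rmult_integral in Hy; destruct Hy; [contradiction | auto].
Qed.

Definition delay_remainder (a11 a12 a21 a22 b1 b2 mu x1 x2 y1 y2 : R) : R :=
  (b2 * a22 - mu) * (a11 * y1 + a12 * y2) * x1 - b1 * a12 * (a21 * y1 + a22 * y2) * x2.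

Lemma eigen_form_delay_identity a11 a12 a21 a22 b1 b2 mu lam x1 x2 y1 y2 :
  (b1 * a11 - mu) * (b2 * a22 - mu) - b1 * a12 * (b2 * a21) = 0 ->
  (b2 * a22 - mu) * (- lam * (a11 * y1 + a12 * y2) * (b1 + x1))
  - b1 * a12 * (- lam * (a21 * y1 + a22 * y2) * (b2 + x2))
  + lam * mu * eigen_form a12 a22 b1 b2 mu y1 y2
  = - lam * delay_remainder a11 a12 a21 a22 b1 b2 mu x1 x2 y1 y2.
Proof.
  intros Hchar.
  transitivity (- lam * delay_remainder a11 a12 a21 a22 b1 b2 mu x1 x2 y1 y2
                - lam * y1 * ((b1 * a11 - mu) * (b2 * a22 - mu) - b1 * a12 * (b2 * a21)));
    [unfold eigen_form, delay_remainder; ring | rewrite Hchar; ring].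
Qed.

Definition delay_remainder_bounded (a11 a12 a21 a22 b1 b2 mu1 mu2 mu K : R) : Prop :=
  forall x1 x2 y1 y2,
    delay_remainder a11 a12 a21 a22 b1 b2 mu x1 x2 y1 y2 ^ 2 <=
    K * (x1 ^ 2 + x2 ^ 2) *
    (eigen_form a12 a22 b1 b2 mu1 y1 y2 ^ 2 + eigen_form a12 a22 b1 b2 mu2 y1 y2 ^ 2).

Lemma delay_remainder_bound a11 a12 a21 a22 b1 b2 mu1 mu2 mu :
  mu1 <> mu2 -> b1 * a12 <> 0 ->
  exists K, 0 <= K /\ delay_remainder_bounded a11 a12 a21 a22 b1 b2 mu1 mu2 mu K.
Proof.
  intros Hmu HB.
  destruct (sqr_norm_le_of_det (b2 * a22 - mu1) (- (b1 * a12)) (b2 * a22 - mu2) (- (b1 * a12)))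
    as [C [HC HCy]].
  { replace ((b2 * a22 - mu1) * - (b1 * a12) - - (b1 * a12) * (b2 * a22 - mu2))
      with (b1 * a12 * (mu1 - mu2)) by ring.
    apply Rmult_integral_contrapositive; split; lra. }
  set (p1 := (b2 * a22 - mu) * a11); set (p2 := (b2 * a22 - mu) * a12).
  set (q1 := - (b1 * a12 * a21)); set (q2 := - (b1 * a12 * a22)).
  set (P := p1 ^ 2 + p2 ^ 2 + (q1 ^ 2 + q2 ^ 2)).
  assert (HP : 0 <= P) by (unfold P; nra).
  exists (P * C); split; [nra|]; intros x1 x2 y1 y2.
  assert (Hrem : delay_remainder a11 a12 a21 a22 b1 b2 mu x1 x2 y1 y2 ^ 2 <=
                 (x1 ^ 2 + x2 ^ 2) * (P * (y1 ^ 2 + y2 ^ 2))).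
  { replace (delay_remainder a11 a12 a21 a22 b1 b2 mu x1 x2 y1 y2)
      with (x1 * (p1 * y1 + p2 * y2) + x2 * (q1 * y1 + q2 * y2))
      by (unfold delay_remainder, p1, p2, q1, q2; ring).
    eapply Rle_trans; [apply cauchy_schwarz_2|]; apply Rmult_le_compat_l; [nra|].
    pose proof (cauchy_schwarz_2 p1 p2 y1 y2); pose proof (cauchy_schwarz_2 q1 q2 y1 y2).
    unfold P; lra. }
  specialize (HCy y1 y2); unfold eigen_form.
  replace ((b2 * a22 - mu1) * y1 - b1 * a12 * y2) with ((b2 * a22 - mu1) * y1 + - (b1 * a12) * y2)
    by ring.
  replace ((b2 * a22 - mu2) * y1 - b1 * a12 * y2) with ((b2 * a22 - mu2) * y1 + - (b1 * a12) * y2)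
    by ring.
  eapply Rle_trans; [apply Hrem|].
  match type of HCy with _ <= C * ?W =>
    apply Rle_trans with ((x1 ^ 2 + x2 ^ 2) * (P * (C * W))); [|right; ring] end.
  apply Rmult_le_compat_l; [nra | apply Rmult_le_compat_l; auto].
Qed.

Lemma delay_remainder_sqr_le a11 a12 a21 a22 b1 b2 mu1 mu2 mu K m lam x1 x2 y1 y2 :
  0 <= K -> delay_remainder_bounded a11 a12 a21 a22 b1 b2 mu1 mu2 mu K ->
  Rabs x1 <= m -> Rabs x2 <= m ->
  (lam * delay_remainder a11 a12 a21 a22 b1 b2 mu x1 x2 y1 y2) ^ 2 <=
  lam ^ 2 * K * (2 * m ^ 2) *
  (eigen_form a12 a22 b1 b2 mu1 y1 y2 ^ 2 + eigen_form a12 a22 b1 b2 mu2 y1 y2 ^ 2).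
Proof.
  intros HK0 HK Hx1 Hx2.
  assert (Hx : x1 ^ 2 + x2 ^ 2 <= 2 * m ^ 2).
  { rewrite <- (pow2_abs x1), <- (pow2_abs x2).
    pose proof (pow_incr (Rabs x1) m 2 (conj (Rabs_pos _) Hx1)).
    pose proof (pow_incr (Rabs x2) m 2 (conj (Rabs_pos _) Hx2)); lra. }
  specialize (HK x1 x2 y1 y2).
  set (W := eigen_form a12 a22 b1 b2 mu1 y1 y2 ^ 2 + eigen_form a12 a22 b1 b2 mu2 y1 y2 ^ 2) in *.
  assert (0 <= W) by (unfold W; nra).
  rewrite Rpow_mult_distr.
  replace (lam ^ 2 * K * (2 * m ^ 2) * W) with (lam ^ 2 * (K * (2 * m ^ 2) * W)) by ring.
  apply Rmult_le_compat_l; [apply pow2_ge_0|].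
  eapply Rle_trans; [apply HK|].
  apply Rmult_le_compat_r; [auto | apply Rmult_le_compat_l; auto].
Qed.

Section PeriodicSolution.

Variables (a11 a12 a21 a22 b1 b2 tau lam : R) (x1 x2 : R -> R).
Hypotheses (Hsol : solves_P a11 a12 a21 a22 b1 b2 tau lam x1 x2)
  (Hx1 : continuous_R x1) (Hx2 : continuous_R x2) (P1 : periodic x1) (P2 : periodic x2).

Let dx1 t := - lam * (a11 * x1 (t - tau / lam) + a12 * x2 (t - tau / lam)) * (b1 + x1 t).
Let dx2 t := - lam * (a21 * x1 (t - tau / lam) + a22 * x2 (t - tau / lam)) * (b2 + x2 t).

Let Hdx1 : continuous_R dx1. Proof. unfold dx1; continuity_R. Qed.
Let Hdx2 : continuous_R dx2. Proof. unfold dx2; continuity_R. Qed.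

Lemma solution_abs_le_Ehat_norm t : RInt x1 0 (2 * PI) = 0 -> RInt x2 0 (2 * PI) = 0 ->
  0 <= t <= 2 * PI ->
  Rabs (x1 t) <= sqrt (2 * PI) * Ehat_norm x1 /\ Rabs (x2 t) <= sqrt (2 * PI) * Ehat_norm x2.
Proof.
  intros I1 I2 Ht; split.
  - apply (zero_mean_abs_le_Ehat_norm x1 dx1); auto; intro u; apply (Hsol u).
  - apply (zero_mean_abs_le_Ehat_norm x2 dx2); auto; intro u; apply (Hsol u).
Qed.

Let zeta mu t := eigen_form a12 a22 b1 b2 mu (x1 t) (x2 t).

Let continuous_R_zeta mu : continuous_R (zeta mu).
Proof. unfold zeta, eigen_form; continuity_R. Qed.

Let periodic_zeta mu : periodic (zeta mu).
Proof. intro t; unfold zeta; rewrite P1, P2; reflexivity. Qed.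

Lemma eigen_form_coercive mu d :
  (b1 * a11 - mu) * (b2 * a22 - mu) - b1 * a12 * (b2 * a21) = 0 ->
  0 <= d -> (forall k, d <= delay_symbol k (lam * mu) (tau / lam)) ->
  d * RInt (fun t => zeta mu t ^ 2) 0 (2 * PI) <=
  RInt (fun t => (lam * delay_remainder a11 a12 a21 a22 b1 b2 mu
                   (x1 t) (x2 t) (x1 (t - tau / lam)) (x2 (t - tau / lam))) ^ 2) 0 (2 * PI).
Proof.
  intros Hchar Hd Hsym.
  set (dz t := (b2 * a22 - mu) * dx1 t - b1 * a12 * dx2 t).
  assert (Hdz : forall t, is_derive (zeta mu) t (dz t)).
  { intro t; unfold zeta, eigen_form, dz.
    apply (is_derive_minus (K := R_AbsRing) (V := R_NormedModule)
             (fun t => (b2 * a22 - mu) * x1 t) (fun t => b1 * a12 * x2 t));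
      apply is_derive_scal, (Hsol t). }
  eapply Rle_trans; [apply (delay_operator_coercive (zeta mu) dz); auto; unfold dz; continuity_R|].
  right; apply RInt_ext; intros t _; unfold dz, zeta, dx1, dx2.
  rewrite eigen_form_delay_identity by auto; R_eq; ring.
Qed.

Lemma eigen_form_energy mu1 mu2 mu d K m :
  (b1 * a11 - mu) * (b2 * a22 - mu) - b1 * a12 * (b2 * a21) = 0 ->
  0 <= d -> (forall k, d <= delay_symbol k (lam * mu) (tau / lam)) ->
  0 <= K -> delay_remainder_bounded a11 a12 a21 a22 b1 b2 mu1 mu2 mu K ->
  (forall t, 0 <= t <= 2 * PI -> Rabs (x1 t) <= m /\ Rabs (x2 t) <= m) ->
  d * RInt (fun t => zeta mu t ^ 2) 0 (2 * PI) <=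
  lam ^ 2 * K * (2 * m ^ 2) *
  (RInt (fun t => zeta mu1 t ^ 2) 0 (2 * PI) + RInt (fun t => zeta mu2 t ^ 2) 0 (2 * PI)).
Proof.
  intros Hchar Hd Hsym HK0 HK Hm; pose proof PI_RGT_0; set (s := tau / lam).
  pose proof (continuous_R_zeta mu1); pose proof (continuous_R_zeta mu2).
  assert (Hshift : forall mu', RInt (fun t => zeta mu' (t - s) ^ 2) 0 (2 * PI)
                              = RInt (fun t => zeta mu' t ^ 2) 0 (2 * PI)).
  { intro mu'; apply (RInt_periodic_translate (fun t => zeta mu' t ^ 2) (- s)).
    - apply continuous_R_pow, continuous_R_zeta.
    - intro t; cbv beta; rewrite periodic_zeta; reflexivity. }
  eapply Rle_trans; [apply eigen_form_coercive; auto|]; fold s.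
  apply Rle_trans with (RInt (fun t => lam ^ 2 * K * (2 * m ^ 2) *
                          (zeta mu1 (t - s) ^ 2 + zeta mu2 (t - s) ^ 2)) 0 (2 * PI)).
  - apply RInt_le_R; [lra | unfold delay_remainder; continuity_R | continuity_R |].
    intros t Ht; destruct (Hm t Ht); apply delay_remainder_sqr_le; auto.
  - rewrite RInt_Rmult_l, RInt_Rplus, !Hshift by continuity_R; lra.
Qed.

Lemma small_solution_vanishes mu1 mu2 d K1 K2 m1 :
  mu1 <> mu2 -> b1 * a12 <> 0 ->
  (b1 * a11 - mu1) * (b2 * a22 - mu1) - b1 * a12 * (b2 * a21) = 0 ->
  (b1 * a11 - mu2) * (b2 * a22 - mu2) - b1 * a12 * (b2 * a21) = 0 ->
  0 < d -> (forall k, d <= delay_symbol k (lam * mu1) (tau / lam)) ->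
  (forall k, d <= delay_symbol k (lam * mu2) (tau / lam)) ->
  0 <= K1 -> delay_remainder_bounded a11 a12 a21 a22 b1 b2 mu1 mu2 mu1 K1 ->
  0 <= K2 -> delay_remainder_bounded a11 a12 a21 a22 b1 b2 mu1 mu2 mu2 K2 ->
  RInt x1 0 (2 * PI) = 0 -> RInt x2 0 (2 * PI) = 0 -> Ehat_norm x1 <= m1 -> Ehat_norm x2 <= m1 ->
  lam ^ 2 * ((K1 + K2) * (4 * PI)) * m1 ^ 2 < d ->
  forall t, x1 t = 0 /\ x2 t = 0.
Proof.
  intros Hmu HB Hchar1 Hchar2 Hd Hsym1 Hsym2 HK1 RK1 HK2 RK2 I1 I2 N1 N2 Hsmall t.
  pose proof PI_RGT_0; set (m := sqrt (2 * PI) * m1).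
  assert (Hm : forall t, 0 <= t <= 2 * PI -> Rabs (x1 t) <= m /\ Rabs (x2 t) <= m).
  { intros u Hu; destruct (solution_abs_le_Ehat_norm u I1 I2 Hu).
    pose proof (sqrt_pos (2 * PI)); unfold m; split; eapply Rle_trans; eauto;
      apply Rmult_le_compat_l; auto. }
  replace (lam ^ 2 * ((K1 + K2) * (4 * PI)) * m1 ^ 2) with (lam ^ 2 * (K1 + K2) * (2 * m ^ 2))
    in Hsmall
    by (unfold m; rewrite Rpow_mult_distr, pow2_sqrt by lra; ring).
  pose proof (eigen_form_energy mu1 mu2 mu1 d K1 m Hchar1 ltac:(lra) Hsym1 HK1 RK1 Hm) as E1.
  pose proof (eigen_form_energy mu1 mu2 mu2 d K2 m Hchar2 ltac:(lra) Hsym2 HK2 RK2 Hm) as E2.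
  set (S1 := RInt (fun t => zeta mu1 t ^ 2) 0 (2 * PI)) in *.
  set (S2 := RInt (fun t => zeta mu2 t ^ 2) 0 (2 * PI)) in *.
  assert (0 <= S1) by (apply RInt_sqr_ge_0; [lra | apply continuous_R_zeta]).
  assert (0 <= S2) by (apply RInt_sqr_ge_0; [lra | apply continuous_R_zeta]).
  assert (HS : S1 + S2 <= 0).
  { destruct (Rle_lt_dec (S1 + S2) 0) as [|Hpos]; auto.
    assert (lam ^ 2 * (K1 + K2) * (2 * m ^ 2) * (S1 + S2) < d * (S1 + S2))
      by (apply Rmult_lt_compat_r; auto).
    lra. }
  assert (Hzero : forall mu', RInt (fun t => zeta mu' t ^ 2) 0 (2 * PI) <= 0 -> zeta mu' t = 0).
  { intros mu' Hint; apply (RInt_sqr_le_0_eq_0 (zeta mu') t (t + 2 * PI)); [auto | lra | lra |].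
    rewrite RInt_periodic_window; auto; [apply continuous_R_pow, continuous_R_zeta|].
    intro u; cbv beta; rewrite periodic_zeta; reflexivity. }
  apply (eigen_form_eq_0 a12 a22 b1 b2 mu1 mu2); auto; apply Hzero; [fold S1 | fold S2]; lra.
Qed.

End PeriodicSolution.

Lemma sqr_sqrt_ratio_lt K d : 0 <= K -> 0 < d -> K * sqrt (d / (2 * (K + 1))) ^ 2 < d.
Proof.
  intros HK Hd; rewrite pow2_sqrt by (apply Rdiv_le_0_compat; lra).
  replace (K * (d / (2 * (K + 1)))) with (d * (K / (2 * (K + 1)))) by (field; lra).
  rewrite <- (Rmult_1_r d) at 2; apply Rmult_lt_compat_l; [lra|].
  apply Rlt_div_l; lra.
Qed.

Theorem lemma4p1
  (r1 r2 a11 a12 a21 a22 b1 b2 mu1 mu2 tau lam1 lam2 : R) (n1 n2 : nat) :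
  0 < a11 -> 0 < a12 -> 0 < a21 -> 0 < a22 ->
  a11 * a22 - a12 * a21 <> 0 ->
  a11 * b1 + a12 * b2 = r1 -> a21 * b1 + a22 * b2 = r2 ->
  0 < b1 -> 0 < b2 ->
  (forall y1 y2 : R, (y1 <> 0 \/ y2 <> 0) ->
     (a11 * y1 + a12 * y2) * y1 + (a21 * y1 + a22 * y2) * y2 > 0) ->
  is_eigenvalue2 (b1 * a11) (b1 * a12) (b2 * a21) (b2 * a22) mu1 ->
  is_eigenvalue2 (b1 * a11) (b1 * a12) (b2 * a21) (b2 * a22) mu2 ->
  0 < mu1 -> 0 < mu2 ->
  0 < tau ->
  Rmin (2 * PI / mu1) (2 * PI / mu2) < tau ->
  n1 <> n2 ->
  PI / 2 + 2 * INR n1 * PI < mu1 * tau < PI / 2 + 2 * (INR n1 + 1) * PI ->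
  PI / 2 + 2 * INR n2 * PI < mu2 * tau < PI / 2 + 2 * (INR n2 + 1) * PI ->
  0 < lam1 -> 0 < lam2 -> lam1 < lam2 ->
  exists m1 : R, 0 < m1 /\
    forall (lam : R) (x1 x2 : R -> R),
      lam1 <= lam <= lam2 ->
      in_Theta0 b1 b2 x1 x2 ->
      solves_P a11 a12 a21 a22 b1 b2 tau lam x1 x2 ->
      (exists t, x1 t <> 0 \/ x2 t <> 0) ->
      ~ (Ehat_norm x1 <= m1 /\ Ehat_norm x2 <= m1).
Proof.
  intros _ Ha12 _ _ _ _ _ Hb1 Hb2 _ He1 He2 Hmu1 Hmu2 Htau _ Hn Hw1 Hw2 Hlam1 _ _.
  assert (Hmu : mu1 <> mu2) by (intros <-; apply Hn, (in_window_unique n1 n2 (mu1 * tau)); auto).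
  assert (HB : b1 * a12 <> 0) by (apply Rgt_not_eq, Rmult_lt_0_compat; auto).
  destruct (delay_remainder_bound a11 a12 a21 a22 b1 b2 mu1 mu2 mu1) as [K1 [HK1 RK1]]; auto.
  destruct (delay_remainder_bound a11 a12 a21 a22 b1 b2 mu1 mu2 mu2) as [K2 [HK2 RK2]]; auto.
  pose proof (sin_lt_1_in_window n1 _ Hw1); pose proof (sin_lt_1_in_window n2 _ Hw2).
  set (d := Rmin (delay_symbol_floor mu1 tau lam1) (delay_symbol_floor mu2 tau lam1)).
  assert (Hd : 0 < d) by (apply Rmin_glb_lt; apply delay_symbol_floor_pos; auto).
  set (C := (K1 + K2) * (4 * PI)); set (K := lam2 ^ 2 * C).
  assert (HC : 0 <= C) by (pose proof PI_RGT_0; apply Rmult_le_pos; lra).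
  assert (HK : 0 <= K) by (apply Rmult_le_pos; [apply pow2_ge_0 | auto]).
  exists (sqrt (d / (2 * (K + 1)))); split; [apply sqrt_lt_R0, Rdiv_lt_0_compat; lra|].
  intros lam x1 x2 Hlam [[Hx1 [Px1 [_ Ix1]]] [[Hx2 [Px2 [_ Ix2]]] _]] Hsol [t0 Ht0] [N1 N2].
  destruct (small_solution_vanishes a11 a12 a21 a22 b1 b2 tau lam x1 x2 Hsol Hx1 Hx2 Px1 Px2
              mu1 mu2 d K1 K2 (sqrt (d / (2 * (K + 1)))) Hmu HB
              (is_eigenvalue2_char _ _ _ _ _ He1) (is_eigenvalue2_char _ _ _ _ _ He2) Hd)
    with (t := t0); try tauto.
  - intro k; eapply Rle_trans; [apply Rmin_l | apply delay_symbol_ge_floor; auto; lra].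
  - intro k; eapply Rle_trans; [apply Rmin_r | apply delay_symbol_ge_floor; auto; lra].
  - eapply Rle_lt_trans; [|apply (sqr_sqrt_ratio_lt K d); auto].
    apply Rmult_le_compat_r; [apply pow2_ge_0 | apply Rmult_le_compat_r; [auto|]].
    apply pow_incr; lra.
Qed.
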